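(* Let $\Xi\to C$ be a sequent without stoups (regarded, in the context of $\mathcal{M}'_{2015}$, as a sequent all of whose stoups are empty). Then the following are equivalent: (1) $\Xi\to C$ is derivable in $\mathcal{F}_{2015}$ without cut; (2) $\Xi\to C$ is derivable in $\mathcal{F}_{2015}$, possibly using cut; (3) $\Xi\to C$ is derivable in $\mathcal{M}'_{2015}$ extended with the stoup cut rule; (4) $\Xi\to C$ is derivable in $\mathcal{M}'_{2015}$ (without cut).
   Context: Formulae are built from a countable set of variables and $\mathbf1$ by $\backslash,/,\cdot,\wedge,\vee$ and the unary $\langle\rangle$, $[]^{-1}$, $!$. Calculi with stoups: a stoup is a finite multiset of formulae ($\varnothing$ empty); a tree term is a formula or $[\Xi]$; a meta-formula is $\zeta;\Gamma$ ($\zeta$ a stoup, $\Gamma$ a finite sequence of tree terms, empty $\Lambda$), $\varnothing;\Gamma$ written $\Gamma$; comma is concatenation / multiset union; sequents $\Xi\to C$; $\Xi(\Theta)$ designates an occurrence of a meta-formula $\Theta$ which is $\Xi$ itself or the content of a bracket $[\Theta]$ at any depth. Rules of $\mathcal{M}'_{2015}$: axioms $A\to A$, $\Lambda\to\mathbf1$; ($/L$) from $\zeta_1;\Gamma\to B$ and $\Xi(\zeta_2;\Delta_1,C,\Delta_2)\to D$ infer $\Xi(\zeta_1,\zeta_2;\Delta_1,C/B,\Gamma,\Delta_2)\to D$; ($/R$) from $\zeta;\Gamma,B\to C$ infer $\zeta;\Gamma\to C/B$; ($\backslash L$) from $\zeta_1;\Gamma\to A$ and $\Xi(\zeta_2;\Delta_1,C,\Delta_2)\to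 D$ infer $\Xi(\zeta_1,\zeta_2;\Delta_1,\Gamma,A\backslash C,\Delta_2)\to D$; ($\backslash R$) from $\zeta;A,\Gamma\to C$ infer $\zeta;\Gamma\to A\backslash C$; ($\cdot L$) from $\Xi(\zeta;\Delta_1,A,B,\Delta_2)\to D$ infer $\Xi(\zeta;\Delta_1,A\cdot B,\Delta_2)\to D$; ($\cdot R$) from $\zeta_1;\Delta\to A$, $\zeta_2;\Gamma\to B$ infer $\zeta_1,\zeta_2;\Delta,\Gamma\to A\cdot B$; ($\mathbf1L$) from $\Xi(\zeta;\Delta_1,\Delta_2)\to A$ infer $\Xi(\zeta;\Delta_1,\mathbf1,\Delta_2)\to A$; ($\vee L$) from $\Xi(\zeta;\Delta_1,A_1,\Delta_2)\to C$ and $\Xi(\zeta;\Delta_1,A_2,\Delta_2)\to C$ infer $\Xi(\zeta;\Delta_1,A_1\vee A_2,\Delta_2)\to C$; ($\vee R_i$) from $\Xi\to A_i$ infer $\Xi\to A_1\vee A_2$; ($\wedge L_i$) from $\Xi(\zeta;\Delta_1,A_i,\Delta_2)\to C$ infer $\Xi(\zeta;\Delta_1,A_1\wedge A_2,\Delta_2)\to C$; ($\wedge R$) from $\Xi\to A_1$ and $\Xi\to A_2$ infer $\Xi\to A_1\wedge A_2$; ($[]^{-1}L$) from $\Xi(\zeta;\Delta_1,A,\Delta_2)\to B$ infer $\Xi(\zeta;\Delta_1,[[]^{-1}A],\Delta_2)\to B$; ($[]^{-1}R$) from $[\Xi]\to A$ infer $\Xi\to[]^{-1}A$; ($\langle\rangle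 L$) from $\Xi(\zeta;\Delta_1,[A],\Delta_2)\to B$ infer $\Xi(\zeta;\Delta_1,\langle\rangle A,\Delta_2)\to B$; ($\langle\rangle R$) from $\Xi\to A$ infer $[\Xi]\to\langle\rangle A$; ($!L$) from $\Xi(\zeta,A;\Gamma_1,\Gamma_2)\to B$ infer $\Xi(\zeta;\Gamma_1,!A,\Gamma_2)\to B$; ($!P$) from $\Xi(\zeta;\Gamma_1,A,\Gamma_2)\to B$ infer $\Xi(\zeta,A;\Gamma_1,\Gamma_2)\to B$; ($!R'$) from $\zeta;\Lambda\to B$ infer $\zeta;\Lambda\to!B$, if $\zeta\ne\varnothing$; ($!C'$) from $\Xi(\zeta_1,\zeta_2;\Gamma_1,[\zeta',\zeta_2;\Gamma_2],\Gamma_3)\to C$ infer $\Xi(\zeta_1,\zeta_2,\zeta';\Gamma_1,\Gamma_2,\Gamma_3)\to C$, if $\zeta_2\ne\varnothing$. The stoup cut rule is: from $\xi;\Pi\to A$ and $\Xi(\zeta;\Gamma_1,A,\Gamma_2)\to C$ infer $\Xi(\xi,\zeta;\Gamma_1,\Pi,\Gamma_2)\to C$. Stoup-free calculus $\mathcal{F}_{2015}$: meta-formulae are finite sequences of tree terms; rules are the stoup-free versions of the rules above other than $!L,!P,!R',!C'$ (drop all stoups), together with ($!L$) from $\Xi(\Delta_1,A,\Delta_2)\to C$ infer $\Xi(\Delta_1,!A,\Delta_2)\to C$; ($!P_1$) from $\Xi(\Delta_1,!A,\Phi,\Delta_2)\to C$ infer $\Xi(\Delta_1,\Phi,!A,\Delta_2)\to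 C$; ($!P_2$) the converse; ($!R$) from $!A_1,\dots,!A_n\to B$ infer $!A_1,\dots,!A_n\to!B$ ($n\ge1$); ($!C$) from $\Xi(!A_1,\dots,!A_n,\Gamma_1,[!A_1,\dots,!A_n,\Gamma_2],\Gamma_3)\to C$ infer $\Xi(!A_1,\dots,!A_n,\Gamma_1,\Gamma_2,\Gamma_3)\to C$ ($n\geq1$); and the cut rule: from $\Pi\to A$ and $\Xi(\Gamma_1,A,\Gamma_2)\to C$ infer $\Xi(\Gamma_1,\Pi,\Gamma_2)\to C$. *)

From Stdlib Require Import List Permutation.
Import ListNotations.

Inductive formula : Type :=
| Var   : nat -> formula
| One   : formula
| Under : formula -> formula -> formula   (* Under A C  =  A \ C *)
| Over  : formula -> formula -> formula   (* Over C B   =  C / B *)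
| Prod  : formula -> formula -> formula
| And   : formula -> formula -> formula
| Or    : formula -> formula -> formula
| Diam  : formula -> formula
| BoxI  : formula -> formula
| Bang  : formula -> formula.

(** Tree terms: a formula or a bracketed meta-formula [Xi];
    a meta-formula is a finite sequence of tree terms. *)
Inductive ftt : Type :=
| FF : formula -> ftt
| FB : list ftt -> ftt.

(** One-hole contexts Xi(_): the hole is the whole meta-formula or the
    content of a bracket at any depth. *)
Inductive fctx : Type :=
| FHole : fctx
| FIn   : list ftt -> fctx -> list ftt -> fctx.

Fixpoint ffill (K : fctx) (T : list ftt) : list ftt :=
  match K with
  | FHole => T
  | FIn G1 K' G2 => G1 ++ FB (ffill K' T) :: G2
  end.

Definition fbangs (As : list formula) : list ftt :=
  map (fun A => FF (Bang A)) As.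

Inductive F_der (c : bool) : list ftt -> formula -> Prop :=
| F_ax A : F_der c [FF A] A
| F_oneR : F_der c [] One
| F_overL K G B D1 C D2 D :
    F_der c G B -> F_der c (ffill K (D1 ++ FF C :: D2)) D ->
    F_der c (ffill K (D1 ++ FF (Over C B) :: G ++ D2)) D
| F_overR G B C :
    F_der c (G ++ [FF B]) C -> F_der c G (Over C B)
| F_underL K G A D1 C D2 D :
    F_der c G A -> F_der c (ffill K (D1 ++ FF C :: D2)) D ->
    F_der c (ffill K (D1 ++ G ++ FF (Under A C) :: D2)) D
| F_underR G A C :
    F_der c (FF A :: G) C -> F_der c G (Under A C)
| F_prodL K D1 A B D2 D :
    F_der c (ffill K (D1 ++ FF A :: FF B :: D2)) D ->
    F_der c (ffill K (D1 ++ FF (Prod A B) :: D2)) D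
| F_prodR De G A B :
    F_der c De A -> F_der c G B -> F_der c (De ++ G) (Prod A B)
| F_oneL K D1 D2 A :
    F_der c (ffill K (D1 ++ D2)) A ->
    F_der c (ffill K (D1 ++ FF One :: D2)) A
| F_orL K D1 A1 A2 D2 C :
    F_der c (ffill K (D1 ++ FF A1 :: D2)) C ->
    F_der c (ffill K (D1 ++ FF A2 :: D2)) C ->
    F_der c (ffill K (D1 ++ FF (Or A1 A2) :: D2)) C
| F_orR1 X A1 A2 : F_der c X A1 -> F_der c X (Or A1 A2)
| F_orR2 X A1 A2 : F_der c X A2 -> F_der c X (Or A1 A2)
| F_andL1 K D1 A1 A2 D2 C :
    F_der c (ffill K (D1 ++ FF A1 :: D2)) C ->
    F_der c (ffill K (D1 ++ FF (And A1 A2) :: D2)) C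
| F_andL2 K D1 A1 A2 D2 C :
    F_der c (ffill K (D1 ++ FF A2 :: D2)) C ->
    F_der c (ffill K (D1 ++ FF (And A1 A2) :: D2)) C
| F_andR X A1 A2 : F_der c X A1 -> F_der c X A2 -> F_der c X (And A1 A2)
| F_boxL K D1 A D2 B :
    F_der c (ffill K (D1 ++ FF A :: D2)) B ->
    F_der c (ffill K (D1 ++ FB [FF (BoxI A)] :: D2)) B
| F_boxR X A : F_der c [FB X] A -> F_der c X (BoxI A)
| F_diamL K D1 A D2 B :
    F_der c (ffill K (D1 ++ FB [FF A] :: D2)) B ->
    F_der c (ffill K (D1 ++ FF (Diam A) :: D2)) B
| F_diamR X A : F_der c X A -> F_der c [FB X] (Diam A)
| F_bangL K D1 A D2 C :
    F_der c (ffill K (D1 ++ FF A :: D2)) C ->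
    F_der c (ffill K (D1 ++ FF (Bang A) :: D2)) C
| F_bangP1 K D1 A Phi D2 C :
    F_der c (ffill K (D1 ++ FF (Bang A) :: Phi ++ D2)) C ->
    F_der c (ffill K (D1 ++ Phi ++ FF (Bang A) :: D2)) C
| F_bangP2 K D1 A Phi D2 C :
    F_der c (ffill K (D1 ++ Phi ++ FF (Bang A) :: D2)) C ->
    F_der c (ffill K (D1 ++ FF (Bang A) :: Phi ++ D2)) C
| F_bangR As B :
    As <> [] -> F_der c (fbangs As) B -> F_der c (fbangs As) (Bang B)
| F_bangC K As G1 G2 G3 C :
    As <> [] ->
    F_der c (ffill K (fbangs As ++ G1 ++ FB (fbangs As ++ G2) :: G3)) C ->
    F_der c (ffill K (fbangs As ++ G1 ++ G2 ++ G3)) C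
| F_cut K Pi A G1 G2 C :
    c = true ->
    F_der c Pi A -> F_der c (ffill K (G1 ++ FF A :: G2)) C ->
    F_der c (ffill K (G1 ++ Pi ++ G2)) C.

(** A stoup is a finite multiset of formulae, represented by a list taken
    up to permutation (see [mf_eq] and the rule [M_mset] below). *)
Definition stoup := list formula.

Inductive mtt : Type :=
| MF : formula -> mtt
| MB : stoup -> list mtt -> mtt.

Definition mf : Type := (stoup * list mtt)%type.

Definition mbr (T : mf) : mtt := MB (fst T) (snd T).

Inductive mctx : Type :=
| MHole : mctx
| MIn   : stoup -> list mtt -> mctx -> list mtt -> mctx.

Fixpoint mfill (K : mctx) (T : mf) : mf :=
  match K with
  | MHole => T
  | MIn z G1 K' G2 => (z, G1 ++ mbr (mfill K' T) :: G2)
  end.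

Inductive mtt_eq : mtt -> mtt -> Prop :=
| mtt_eqF A : mtt_eq (MF A) (MF A)
| mtt_eqB z z' G G' :
    Permutation z z' -> Forall2 mtt_eq G G' -> mtt_eq (MB z G) (MB z' G').

Definition mf_eq (T T' : mf) : Prop :=
  Permutation (fst T) (fst T') /\ Forall2 mtt_eq (snd T) (snd T').

Definition mbr1 (A : formula) : mtt := MB [] [MF A].

(** Comma on stoups is multiset union, rendered
    as [++] together with the rule [M_mset] identifying stoups that are
    equal as multisets. *)
Inductive M_der (c : bool) : mf -> formula -> Prop :=
| M_mset X X' C : M_der c X C -> mf_eq X X' -> M_der c X' C
| M_ax A : M_der c ([], [MF A]) A
| M_oneR : M_der c ([], []) One
| M_overL K z1 G B z2 D1 C D2 D :
    M_der c (z1, G) B -> M_der c (mfill K (z2, D1 ++ MF C :: D2)) D ->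
    M_der c (mfill K (z1 ++ z2, D1 ++ MF (Over C B) :: G ++ D2)) D
| M_overR z G B C :
    M_der c (z, G ++ [MF B]) C -> M_der c (z, G) (Over C B)
| M_underL K z1 G A z2 D1 C D2 D :
    M_der c (z1, G) A -> M_der c (mfill K (z2, D1 ++ MF C :: D2)) D ->
    M_der c (mfill K (z1 ++ z2, D1 ++ G ++ MF (Under A C) :: D2)) D
| M_underR z G A C :
    M_der c (z, MF A :: G) C -> M_der c (z, G) (Under A C)
| M_prodL K z D1 A B D2 D :
    M_der c (mfill K (z, D1 ++ MF A :: MF B :: D2)) D ->
    M_der c (mfill K (z, D1 ++ MF (Prod A B) :: D2)) D
| M_prodR z1 De z2 G A B :
    M_der c (z1, De) A -> M_der c (z2, G) B ->
    M_der c (z1 ++ z2, De ++ G) (Prod A B)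
| M_oneL K z D1 D2 A :
    M_der c (mfill K (z, D1 ++ D2)) A ->
    M_der c (mfill K (z, D1 ++ MF One :: D2)) A
| M_orL K z D1 A1 A2 D2 C :
    M_der c (mfill K (z, D1 ++ MF A1 :: D2)) C ->
    M_der c (mfill K (z, D1 ++ MF A2 :: D2)) C ->
    M_der c (mfill K (z, D1 ++ MF (Or A1 A2) :: D2)) C
| M_orR1 X A1 A2 : M_der c X A1 -> M_der c X (Or A1 A2)
| M_orR2 X A1 A2 : M_der c X A2 -> M_der c X (Or A1 A2)
| M_andL1 K z D1 A1 A2 D2 C :
    M_der c (mfill K (z, D1 ++ MF A1 :: D2)) C ->
    M_der c (mfill K (z, D1 ++ MF (And A1 A2) :: D2)) C
| M_andL2 K z D1 A1 A2 D2 C :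
    M_der c (mfill K (z, D1 ++ MF A2 :: D2)) C ->
    M_der c (mfill K (z, D1 ++ MF (And A1 A2) :: D2)) C
| M_andR X A1 A2 : M_der c X A1 -> M_der c X A2 -> M_der c X (And A1 A2)
| M_boxL K z D1 A D2 B :
    M_der c (mfill K (z, D1 ++ MF A :: D2)) B ->
    M_der c (mfill K (z, D1 ++ mbr1 (BoxI A) :: D2)) B
| M_boxR X A : M_der c ([], [mbr X]) A -> M_der c X (BoxI A)
| M_diamL K z D1 A D2 B :
    M_der c (mfill K (z, D1 ++ mbr1 A :: D2)) B ->
    M_der c (mfill K (z, D1 ++ MF (Diam A) :: D2)) B
| M_diamR X A : M_der c X A -> M_der c ([], [mbr X]) (Diam A)
| M_bangL K z A G1 G2 B :
    M_der c (mfill K (z ++ [A], G1 ++ G2)) B ->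
    M_der c (mfill K (z, G1 ++ MF (Bang A) :: G2)) B
| M_bangP K z G1 A G2 B :
    M_der c (mfill K (z, G1 ++ MF A :: G2)) B ->
    M_der c (mfill K (z ++ [A], G1 ++ G2)) B
| M_bangR z B :
    z <> [] -> M_der c (z, []) B -> M_der c (z, []) (Bang B)
| M_bangC K z1 z2 z' G1 G2 G3 C :
    z2 <> [] ->
    M_der c (mfill K (z1 ++ z2, G1 ++ MB (z' ++ z2) G2 :: G3)) C ->
    M_der c (mfill K (z1 ++ z2 ++ z', G1 ++ G2 ++ G3)) C
| M_cut K xi Pi A z G1 G2 C :
    c = true ->
    M_der c (xi, Pi) A -> M_der c (mfill K (z, G1 ++ MF A :: G2)) C ->
    M_der c (mfill K (xi ++ z, G1 ++ Pi ++ G2)) C.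

Fixpoint emb_tt (t : ftt) : mtt :=
  match t with
  | FF A => MF A
  | FB G => MB [] (map emb_tt G)
  end.

Definition emb (X : list ftt) : mf := ([], map emb_tt X).

From Stdlib Require Import List Permutation FunctionalExtensionality Lia Wf_nat.
Import ListNotations.

(** Both calculi are interpreted in an auxiliary cut-free calculus S whose
    stoups are genuine multisets (functions [formula -> nat]) and whose left
    rules act on the slot of a frame [Xi(zeta, _; Delta1, _, Delta2)].

    Cut is admissible in S by the usual induction on the cut formula and on
    the two derivations.  In the principal cut on [!B] the stoup [xi] of the
    left premise is substituted for the copies of [B] in the stoups of the
    right derivation (copies are made by !C'), and every use of such a copy
    by !P' becomes a cut on [B].

    Since !L is invertible in S (cut against [!A] derived from the stoup [A]),
    the rules !P1, !P2, !R and !C of F_2015 are admissible in S.  Conversely an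
    S-derivation is read back as a cut-free M'_2015 derivation by choosing
    list representatives of its stoups, and a cut-free M'_2015 derivation
    becomes a cut-free F_2015 derivation by writing every stoup as a prefix of
    !-formulae, which !P1 and !P2 move into place.  So F_2015 and M'_2015
    with cut both reduce through S to cut-free M'_2015, and from there to
    cut-free F_2015. *)

Definition formula_eq_dec (A B : formula) : {A = B} + {A <> B}.
Proof. decide equality; apply PeanoNat.Nat.eq_dec. Defined.

(** * Multisets of formulae *)

Definition mset := formula -> nat.
Definition mset0 : mset := fun _ => 0.
Definition munion (a b : mset) : mset := fun x => a x + b x.
Definition mset1 (A : formula) : mset := fun x => if formula_eq_dec A x then 1 else 0.
Definition mscale (k : nat) (a : mset) : mset := fun x => k * a x.

Ltac mset_eq := apply functional_extensionality; intro;
  unfold munion, mset0, mset1, mscale in *; repeat destruct formula_eq_dec; lia.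

Lemma munion0s z : munion mset0 z = z. Proof. mset_eq. Qed.
Lemma munions0 z : munion z mset0 = z. Proof. mset_eq. Qed.

Lemma mset1_neq0 A : mset1 A <> mset0.
Proof.
  intros E. apply (f_equal (fun g => g A)) in E.
  unfold mset1, mset0 in E. destruct formula_eq_dec; congruence.
Qed.

Definition mset_of_list (l : list formula) : mset := fun B => count_occ formula_eq_dec l B.

Lemma mset_of_list_app l1 l2 : mset_of_list (l1 ++ l2) = munion (mset_of_list l1) (mset_of_list l2).
Proof. apply functional_extensionality; intro x. apply count_occ_app. Qed.

Lemma mset_of_list_cons A l : mset_of_list (A :: l) = munion (mset1 A) (mset_of_list l).
Proof.
  apply functional_extensionality; intro x. unfold mset_of_list, munion, mset1; simpl.
  destruct formula_eq_dec; lia.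
Qed.

Lemma mset_of_list_perm l l' : Permutation l l' -> mset_of_list l = mset_of_list l'.
Proof. intros H. apply functional_extensionality; intro x. apply Permutation_count_occ, H. Qed.

Lemma mset_of_list_perm_inv l l' : mset_of_list l = mset_of_list l' -> Permutation l l'.
Proof.
  intros E. apply (Permutation_count_occ formula_eq_dec). intro x. exact (f_equal (fun g => g x) E).
Qed.

Lemma mset_of_list_neq0 l : l <> [] -> mset_of_list l <> mset0.
Proof.
  destruct l as [|A l]; [congruence|]. intros _ E. apply (f_equal (fun g => g A)) in E.
  unfold mset_of_list, mset0 in E. simpl in E. destruct formula_eq_dec; congruence.
Qed.

Lemma mset_of_list_eq0 l : mset_of_list l = mset0 -> l = [].
Proof.
  destruct l as [|A l]; [reflexivity|]. intros E.
  exfalso. exact (mset_of_list_neq0 (A :: l) ltac:(discriminate) E).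
Qed.

Lemma mset_of_list_union_inv l z a : mset_of_list l = munion z a ->
  exists lz la, Permutation l (lz ++ la) /\ mset_of_list lz = z /\ mset_of_list la = a.
Proof.
  revert z a; induction l as [|B l IH]; intros z a E;
    assert (Ex : forall x, mset_of_list _ x = z x + a x) by (intro x; exact (f_equal (fun g => g x) E)).
  - exists [], []. split; [reflexivity|].
    split; apply functional_extensionality; intro x; specialize (Ex x); unfold mset_of_list in *;
      simpl in *; lia.
  - assert (EB := Ex B). unfold mset_of_list in EB; simpl in EB.
    destruct (formula_eq_dec B B) as [_|n]; [|congruence].
    destruct (z B) eqn:HzB.
    + destruct (IH z (fun x => a x - mset1 B x)) as [lz [la [Hp [Hz Ha]]]].
      { apply functional_extensionality; intro x. specialize (Ex x).
        unfold mset_of_list, munion, mset1 in *; simpl in *. destruct (formula_eq_dec B x); subst; lia. }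
      exists lz, (B :: la). split; [|split; [exact Hz|]].
      * eapply perm_trans; [apply perm_skip, Hp|]. apply Permutation_middle.
      * apply functional_extensionality; intro x. specialize (Ex x). apply (f_equal (fun g => g x)) in Ha.
        unfold mset_of_list, munion, mset1 in *; simpl in *. destruct (formula_eq_dec B x); subst; lia.
    + destruct (IH (fun x => z x - mset1 B x) a) as [lz [la [Hp [Hz Ha]]]].
      { apply functional_extensionality; intro x. specialize (Ex x).
        unfold mset_of_list, munion, mset1 in *; simpl in *. destruct (formula_eq_dec B x); subst; lia. }
      exists (B :: lz), la. split; [apply perm_skip, Hp|split; [|exact Ha]].
      apply functional_extensionality; intro x. specialize (Ex x). apply (f_equal (fun g => g x)) in Hz.
      unfold mset_of_list, munion, mset1 in *; simpl in *. destruct (formula_eq_dec B x); subst; lia.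
Qed.

(** * The auxiliary calculus S *)

Inductive stt : Type :=
| SF : formula -> stt
| SB : mset -> list stt -> stt.

Definition smf : Type := (mset * list stt)%type.
Definition sbr (X : smf) : stt := SB (fst X) (snd X).

Inductive sctx : Type :=
| SHole : sctx
| SIn : mset -> list stt -> sctx -> list stt -> sctx.

Fixpoint sfill (K : sctx) (X : smf) : smf :=
  match K with
  | SHole => X
  | SIn z G1 K' G2 => (z, G1 ++ sbr (sfill K' X) :: G2)
  end.

Fixpoint scomp (K1 K2 : sctx) : sctx :=
  match K1 with
  | SHole => K2
  | SIn z G1 K G2 => SIn z G1 (scomp K K2) G2
  end.

Lemma sfill_scomp K1 K2 X : sfill (scomp K1 K2) X = sfill K1 (sfill K2 X).
Proof. induction K1 as [|z G1 K IH G2]; simpl; rewrite ?IH; reflexivity. Qed.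

(** [Fr K z D1 D2] is the frame [K(z, _; D1, _, D2)]: a plugged meta-formula
    has its stoup merged into [z] and its sequence spliced between [D1] and
    [D2]. *)
Inductive frame : Type := Fr : sctx -> mset -> list stt -> list stt -> frame.

Definition plug (f : frame) (X : smf) : smf :=
  let 'Fr K z D1 D2 := f in sfill K (munion z (fst X), D1 ++ snd X ++ D2).

Definition plugF (f : frame) (A : formula) : smf := plug f (mset0, [SF A]).

Inductive S_der : smf -> formula -> Prop :=
| S_ax A : S_der (mset0, [SF A]) A
| S_oneR : S_der (mset0, []) One
| S_overL f z1 G B C D : S_der (z1, G) B -> S_der (plug f (mset0, [SF C])) D ->
    S_der (plug f (z1, SF (Over C B) :: G)) D
| S_overR z G B C : S_der (z, G ++ [SF B]) C -> S_der (z, G) (Over C B)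
| S_underL f z1 G A C D : S_der (z1, G) A -> S_der (plug f (mset0, [SF C])) D ->
    S_der (plug f (z1, G ++ [SF (Under A C)])) D
| S_underR z G A C : S_der (z, SF A :: G) C -> S_der (z, G) (Under A C)
| S_prodL f A B D : S_der (plug f (mset0, [SF A; SF B])) D ->
    S_der (plug f (mset0, [SF (Prod A B)])) D
| S_prodR z1 De z2 G A B : S_der (z1, De) A -> S_der (z2, G) B ->
    S_der (munion z1 z2, De ++ G) (Prod A B)
| S_oneL f D : S_der (plug f (mset0, [])) D -> S_der (plug f (mset0, [SF One])) D
| S_orL f A1 A2 D : S_der (plug f (mset0, [SF A1])) D -> S_der (plug f (mset0, [SF A2])) D ->
    S_der (plug f (mset0, [SF (Or A1 A2)])) D
| S_orR1 X A1 A2 : S_der X A1 -> S_der X (Or A1 A2)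
| S_orR2 X A1 A2 : S_der X A2 -> S_der X (Or A1 A2)
| S_andL1 f A1 A2 D : S_der (plug f (mset0, [SF A1])) D ->
    S_der (plug f (mset0, [SF (And A1 A2)])) D
| S_andL2 f A1 A2 D : S_der (plug f (mset0, [SF A2])) D ->
    S_der (plug f (mset0, [SF (And A1 A2)])) D
| S_andR X A1 A2 : S_der X A1 -> S_der X A2 -> S_der X (And A1 A2)
| S_boxL f A D : S_der (plug f (mset0, [SF A])) D ->
    S_der (plug f (mset0, [SB mset0 [SF (BoxI A)]])) D
| S_boxR X A : S_der (mset0, [sbr X]) A -> S_der X (BoxI A)
| S_diamL f A D : S_der (plug f (mset0, [SB mset0 [SF A]])) D ->
    S_der (plug f (mset0, [SF (Diam A)])) D
| S_diamR X A : S_der X A -> S_der (mset0, [sbr X]) (Diam A)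
| S_bangL f A D : S_der (plug f (mset1 A, [])) D -> S_der (plug f (mset0, [SF (Bang A)])) D
| S_bangP f A D : S_der (plug f (mset0, [SF A])) D -> S_der (plug f (mset1 A, [])) D
| S_bangR z B : z <> mset0 -> S_der (z, []) B -> S_der (z, []) (Bang B)
| S_bangC f z2 z' G2 D : z2 <> mset0 ->
    S_der (plug f (z2, [SB (munion z' z2) G2])) D -> S_der (plug f (munion z2 z', G2)) D.

Lemma S_der_eq X Y C : S_der X C -> X = Y -> S_der Y C.
Proof. intros d <-; exact d. Qed.

(** * Frame algebra *)

Lemma app_eq_app_cons {T} (L1 L2 G1 G2 : list T) x :
  L1 ++ L2 = G1 ++ x :: G2 ->
  (exists N, L1 = G1 ++ x :: N /\ G2 = N ++ L2) \/
  (exists N, L2 = N ++ x :: G2 /\ G1 = L1 ++ N).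
Proof.
  revert G1; induction L1 as [|a L1 IH]; intros G1 H; simpl in *.
  - right. exists G1. auto.
  - destruct G1 as [|b G1]; simpl in *; injection H as <- H.
    + left. exists L1. auto.
    + destruct (IH _ H) as [[N [-> ->]]|[N [-> ->]]]; [left|right]; exists N; auto.
Qed.

Lemma app_cons_eq_app_cons {T} (E1 E2 E1' E2' : list T) x y :
  E1 ++ x :: E2 = E1' ++ y :: E2' ->
  (E1 = E1' /\ x = y /\ E2 = E2') \/
  (exists N, E1' = E1 ++ x :: N /\ E2 = N ++ y :: E2') \/
  (exists N, E1 = E1' ++ y :: N /\ E2' = N ++ x :: E2).
Proof.
  revert E1'; induction E1 as [|a E1 IH]; intros E1' H; destruct E1' as [|b E1'];
    simpl in *; injection H as <- H.
  - left; auto.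
  - right; left. exists E1'. subst. auto.
  - right; right. exists E1. subst. auto.
  - destruct (IH _ H) as [[-> [-> ->]]|[[N [-> ->]]|[N [-> ->]]]]; auto.
    + right; left; exists N; auto.
    + right; right; exists N; auto.
Qed.

Ltac list_eq := simpl; rewrite ?app_nil_r; repeat (rewrite <- ?app_assoc; simpl);
  rewrite ?app_nil_r; reflexivity.

Lemma smf_eta (X : smf) : X = (fst X, snd X).
Proof. destruct X; reflexivity. Qed.

Lemma sbr_inj X Y : sbr X = sbr Y -> X = Y.
Proof. destruct X, Y; intro H; injection H as -> ->; reflexivity. Qed.

Definition fcomp (H f : frame) : frame :=
  let 'Fr KH zH G1 G2 := H in
  match f with
  | Fr SHole z D1 D2 => Fr KH (munion zH z) (G1 ++ D1) (D2 ++ G2)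
  | Fr (SIn s E1 K E2) z D1 D2 =>
      Fr (scomp KH (SIn (munion zH s) (G1 ++ E1) K (E2 ++ G2))) z D1 D2
  end.

Lemma plug_fcomp H f X : plug (fcomp H f) X = plug H (plug f X).
Proof.
  destruct H as [KH zH G1 G2], f as [[|s E1 K E2] z D1 D2]; simpl.
  - f_equal. f_equal; [mset_eq | list_eq].
  - rewrite sfill_scomp. simpl. f_equal. f_equal. list_eq.
Qed.

Definition fwrap (s : mset) (E1 E2 : list stt) (f : frame) : frame :=
  let 'Fr K z D1 D2 := f in Fr (SIn s E1 K E2) z D1 D2.

Lemma plug_fwrap s E1 E2 f X : plug (fwrap s E1 E2 f) X = (s, E1 ++ sbr (plug f X) :: E2).
Proof. destruct f; reflexivity. Qed.

Definition fbracket : frame := Fr (SIn mset0 [] SHole []) mset0 [] [].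

Lemma plug_fbracket W : plug fbracket W = (mset0, [sbr W]).
Proof.
  destruct W as [w Ws]. unfold plug, fbracket, sbr; simpl. rewrite munion0s, app_nil_r. reflexivity.
Qed.

Definition fapp_r (H : frame) (L : list stt) : frame :=
  match H with
  | Fr SHole z G1 G2 => Fr SHole z G1 (G2 ++ L)
  | Fr (SIn s E1 K E2) z G1 G2 => Fr (SIn s E1 K (E2 ++ L)) z G1 G2
  end.

Lemma plug_fapp_r H L X : plug (fapp_r H L) X = (fst (plug H X), snd (plug H X) ++ L).
Proof. destruct H as [[|s E1 K E2] z G1 G2]; simpl; f_equal; list_eq. Qed.

Definition fapp_l (H : frame) (L : list stt) : frame :=
  match H with
  | Fr SHole z G1 G2 => Fr SHole z (L ++ G1) G2
  | Fr (SIn s E1 K E2) z G1 G2 => Fr (SIn s (L ++ E1) K E2) z G1 G2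
  end.

Lemma plug_fapp_l H L X : plug (fapp_l H L) X = (fst (plug H X), L ++ snd (plug H X)).
Proof. destruct H as [[|s E1 K E2] z G1 G2]; simpl; f_equal; list_eq. Qed.

(** Two slots of the same tree are either nested or disjoint; in the latter
    case filling them commutes. *)
Definition nested (f : frame) (Y : smf) (H : frame) (A : formula) : Prop :=
  exists H0, Y = plugF H0 A /\ forall X, plug H X = plug f (plug H0 X).

Definition disjoint (f : frame) (Y : smf) (H : frame) (A : formula) : Prop :=
  forall X0, exists f', plug H X0 = plug f' Y /\
    forall X, exists Hx, plug f X = plugF Hx A /\ plug Hx X0 = plug f' X.

Ltac smf_eq := simpl; f_equal; try mset_eq; list_eq.
Ltac plug_eq := unfold plugF; simpl; f_equal; smf_eq.

Lemma top_nested_or_disjoint z D1 D2 Y H A :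
  plug (Fr SHole z D1 D2) Y = plugF H A ->
  nested (Fr SHole z D1 D2) Y H A \/ disjoint (Fr SHole z D1 D2) Y H A.
Proof.
  destruct Y as [a Ys], H as [[|s E1 KH E2] zH G1 G2]; unfold plugF, plug; simpl;
    intro Heq; injection Heq as Hs Hl.
  - rewrite munions0 in Hs; subst zH.
    destruct (app_eq_app_cons _ _ _ _ _ Hl) as [[N [-> ->]]|[N [Hl2 ->]]].
    + right. intros [x0 X0s]. exists (Fr SHole (munion z x0) (G1 ++ X0s ++ N) D2). split.
      * smf_eq.
      * intros [x Xs]. exists (Fr SHole (munion z x) G1 (N ++ Xs ++ D2)). split; smf_eq.
    + destruct (app_eq_app_cons _ _ _ _ _ Hl2) as [[M [-> ->]]|[M [-> ->]]].
      * left. exists (Fr SHole a N M). split; [|intros [x Xs]]; smf_eq.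
      * right. intros [x0 X0s]. exists (Fr SHole (munion z x0) D1 (M ++ X0s ++ G2)). split.
        -- smf_eq.
        -- intros [x Xs]. exists (Fr SHole (munion z x) (D1 ++ Xs ++ M) G2). split; smf_eq.
  - subst s. destruct (app_eq_app_cons _ _ _ _ _ Hl) as [[N [-> ->]]|[N [Hl2 ->]]].
    + right. intros X0. exists (Fr SHole z (E1 ++ sbr (plug (Fr KH zH G1 G2) X0) :: N) D2). split.
      * smf_eq.
      * intros [x Xs]. exists (Fr (SIn (munion z x) E1 KH (N ++ Xs ++ D2)) zH G1 G2). split; smf_eq.
    + destruct (app_eq_app_cons _ _ _ _ _ Hl2) as [[M [-> ->]]|[M [-> ->]]].
      * left. exists (Fr (SIn a N KH M) zH G1 G2). split; [reflexivity|intros [x Xs]; smf_eq].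
      * right. intros X0. exists (Fr SHole z D1 (M ++ sbr (plug (Fr KH zH G1 G2) X0) :: E2)). split.
        -- smf_eq.
        -- intros [x Xs]. exists (Fr (SIn (munion z x) (D1 ++ Xs ++ M) KH E2) zH G1 G2). split; smf_eq.
Qed.

Lemma nested_fwrap s E1 E2 f Y H A :
  nested f Y H A -> nested (fwrap s E1 E2 f) Y (fwrap s E1 E2 H) A.
Proof.
  intros [H0 [-> HX]]. exists H0. split; [reflexivity|].
  intros X. rewrite !plug_fwrap, HX. reflexivity.
Qed.

Lemma disjoint_fwrap s E1 E2 f Y H A :
  disjoint f Y H A -> disjoint (fwrap s E1 E2 f) Y (fwrap s E1 E2 H) A.
Proof.
  intros Hd X0. destruct (Hd X0) as [f' [E F]]. exists (fwrap s E1 E2 f'). split.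
  - rewrite !plug_fwrap, E. reflexivity.
  - intros X. destruct (F X) as [Hx [Hx1 Hx2]]. exists (fwrap s E1 E2 Hx).
    unfold plugF. rewrite !plug_fwrap, Hx1, Hx2. split; reflexivity.
Qed.

Lemma bracket_top_disjoint s E1 K E2 z D1 D2 Y zH G1 G2 A :
  plug (Fr (SIn s E1 K E2) z D1 D2) Y = plugF (Fr SHole zH G1 G2) A ->
  disjoint (Fr (SIn s E1 K E2) z D1 D2) Y (Fr SHole zH G1 G2) A.
Proof.
  destruct Y as [a Ys]; unfold plugF, plug; simpl; intro Heq; injection Heq as Hs Hl.
  rewrite munions0 in Hs; subst zH.
  destruct (app_eq_app_cons _ _ _ _ _ Hl) as [[N [-> ->]]|[[|t N] [Hl2 ->]]];
    [|discriminate|injection Hl2 as <- ->].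
  - intros [x0 X0s]. exists (Fr (SIn (munion s x0) (G1 ++ X0s ++ N) K E2) z D1 D2). split.
    + smf_eq.
    + intros [x Xs]. exists (Fr SHole s G1 (N ++ sbr (plug (Fr K z D1 D2) (x, Xs)) :: E2)).
      split; smf_eq.
  - intros [x0 X0s]. exists (Fr (SIn (munion s x0) E1 K (N ++ X0s ++ G2)) z D1 D2). split.
    + smf_eq.
    + intros [x Xs]. exists (Fr SHole s (E1 ++ sbr (plug (Fr K z D1 D2) (x, Xs)) :: N) G2).
      split; smf_eq.
Qed.

Lemma plug_nested_or_disjoint f Y H A :
  plug f Y = plugF H A -> nested f Y H A \/ disjoint f Y H A.
Proof.
  destruct f as [K z D1 D2]. revert H.
  induction K as [|s E1 K IH E2]; intros H Heq; [exact (top_nested_or_disjoint _ _ _ _ _ _ Heq)|].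
  destruct H as [[|s' E1' KH E2'] zH G1 G2].
  { right. exact (bracket_top_disjoint _ _ _ _ _ _ _ _ _ _ _ _ Heq). }
  unfold plugF, plug in Heq; simpl in Heq. injection Heq as <- Hl.
  destruct (app_cons_eq_app_cons _ _ _ _ _ _ Hl) as [[<- [Hb <-]]|[[N [-> ->]]|[N [-> ->]]]].
  - apply sbr_inj in Hb. destruct (IH (Fr KH zH G1 G2) Hb) as [Hn|Hd].
    + left. exact (nested_fwrap s E1 E2 (Fr K z D1 D2) Y (Fr KH zH G1 G2) A Hn).
    + right. exact (disjoint_fwrap s E1 E2 (Fr K z D1 D2) Y (Fr KH zH G1 G2) A Hd).
  - right. intros X0.
    exists (Fr (SIn s E1 K (N ++ sbr (plug (Fr KH zH G1 G2) X0) :: E2')) z D1 D2). split.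
    + smf_eq.
    + intros X. exists (fwrap s (E1 ++ sbr (plug (Fr K z D1 D2) X) :: N) E2' (Fr KH zH G1 G2)).
      unfold plugF. rewrite !plug_fwrap. split; smf_eq.
  - right. intros X0.
    exists (Fr (SIn s (E1' ++ sbr (plug (Fr KH zH G1 G2) X0) :: N) K E2) z D1 D2). split.
    + smf_eq.
    + intros X. exists (fwrap s E1' (N ++ sbr (plug (Fr K z D1 D2) X) :: E2) (Fr KH zH G1 G2)).
      unfold plugF. rewrite !plug_fwrap. split; smf_eq.
Qed.

Lemma plugF_app_inv H A z1 z2 L1 L2 : plugF H A = (munion z1 z2, L1 ++ L2) ->
  (exists H1, plugF H1 A = (z1, L1) /\
     forall X, plug H X = (munion (fst (plug H1 X)) z2, snd (plug H1 X) ++ L2)) \/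
  (exists H2, plugF H2 A = (z2, L2) /\
     forall X, plug H X = (munion z1 (fst (plug H2 X)), L1 ++ snd (plug H2 X))).
Proof.
  destruct H as [[|s E1 K E2] zH G1 G2]; unfold plugF, plug; simpl; intro Heq;
    injection Heq as Hs Hl; symmetry in Hl.
  - rewrite munions0 in Hs; subst zH.
    destruct (app_eq_app_cons _ _ _ _ _ Hl) as [[N [-> ->]]|[N [-> ->]]].
    + left. exists (Fr SHole z1 G1 N). split; [|intros [x Xs]]; smf_eq.
    + right. exists (Fr SHole z2 N G2). split; [|intros [x Xs]]; smf_eq.
  - subst s. destruct (app_eq_app_cons _ _ _ _ _ Hl) as [[N [-> ->]]|[N [-> ->]]].
    + left. exists (Fr (SIn z1 E1 K N) zH G1 G2). split; [reflexivity|intros X; smf_eq].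
    + right. exists (Fr (SIn z2 N K E2) zH G1 G2). split; [reflexivity|intros X; smf_eq].
Qed.

Lemma plugF_single_inv H A a B : plugF H A = (a, [SF B]) ->
  A = B /\ forall X, plug H X = (munion a (fst X), snd X).
Proof.
  destruct H as [[|s E1 K E2] zH G1 G2]; unfold plugF, plug; simpl; intro Heq;
    injection Heq as Hs Hl.
  - rewrite munions0 in Hs; subst zH. destruct G1 as [|t [|]]; try discriminate.
    injection Hl as -> ->. split; [reflexivity|intros X; rewrite app_nil_r; reflexivity].
  - destruct E1 as [|? [|]]; discriminate.
Qed.

Lemma plugF_bracket_inv H A a s L : plugF H A = (a, [SB s L]) ->
  exists H1, plugF H1 A = (s, L) /\ forall X, plug H X = (a, [sbr (plug H1 X)]).
Proof.
  destruct H as [[|s' [|t E1] K E2] zH G1 G2]; unfold plugF, plug; simpl; intro Heq.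
  - injection Heq as _ Hl. destruct G1 as [|? [|]]; discriminate.
  - injection Heq as -> Hs HL ->. exists (Fr K zH G1 G2).
    split; [rewrite <- Hs, <- HL; apply smf_eta|reflexivity].
  - injection Heq as _ _ Hl. destruct E1; discriminate.
Qed.

Lemma plugF_neq_nil H A a : plugF H A <> (a, []).
Proof.
  destruct H as [[|s E1 K E2] zH G1 G2]; unfold plugF, plug; simpl; intro Heq;
    injection Heq as Hs Hl; [destruct G1|destruct E1]; discriminate.
Qed.

(** An occurrence in the conclusion of !C' is tracked into the new bracket. *)
Lemma plugF_into_bracket H A z2 z' G : plugF H A = (munion z2 z', G) ->
  exists H', plugF H' A = (z2, [SB (munion z' z2) G]) /\
    forall X, exists z'' G'', plug H X = (munion z2 z'', G'') /\
                             plug H' X = (z2, [SB (munion z'' z2) G'']).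
Proof.
  destruct H as [[|s E1 K E2] zH G1 G2]; unfold plugF, plug; simpl; intro Heq;
    injection Heq as Hs Hl.
  - rewrite munions0 in Hs; subst zH G.
    exists (Fr (SIn z2 [] SHole []) (munion z' z2) G1 G2). split.
    + unfold plugF, plug, sbr; simpl. rewrite munions0. reflexivity.
    + intros [x Xs]. exists (munion z' x), (G1 ++ Xs ++ G2). split; simpl.
      * f_equal. mset_eq.
      * unfold sbr; simpl. do 3 f_equal. mset_eq.
  - subst s G. exists (Fr (SIn z2 [] (SIn (munion z' z2) E1 K E2) []) zH G1 G2). split.
    + reflexivity.
    + intros X. eexists z', _. split; reflexivity.
Qed.

Lemma disjoint_fill f Y H A X : disjoint f Y H A ->
  exists f', plug H X = plug f' Y /\
    forall P D, (forall Hx, plug f P = plugF Hx A -> S_der (plug Hx X) D) -> S_der (plug f' P) D.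
Proof.
  intros Hd. destruct (Hd X) as [f' [E F]]. exists f'. split; [exact E|].
  intros P D IH. destruct (F P) as [Hx [Hx1 Hx2]]. rewrite <- Hx2. exact (IH Hx Hx1).
Qed.

(** * Cut admissibility in S *)

Definition cut_admissible (A : formula) : Prop :=
  forall X, S_der X A -> forall H E, S_der (plugF H A) E -> S_der (plug H X) E.

Section StoupSubstitution.
Variables (A : formula) (xi : mset).

Definition msubst (s s' : mset) : Prop :=
  exists r k, s = munion r (mscale k (mset1 A)) /\ s' = munion r (mscale k xi).

Inductive tsubst : stt -> stt -> Prop :=
| tsubst_F B : tsubst (SF B) (SF B)
| tsubst_B s s' L L' : msubst s s' -> lsubst L L' -> tsubst (SB s L) (SB s' L')
with lsubst : list stt -> list stt -> Prop :=
| lsubst_nil : lsubst [] []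
| lsubst_cons t t' L L' : tsubst t t' -> lsubst L L' -> lsubst (t :: L) (t' :: L').

Definition smf_subst (X Y : smf) : Prop := msubst (fst X) (fst Y) /\ lsubst (snd X) (snd Y).

Definition frame_subst (f f' : frame) : Prop :=
  forall b b' W W', msubst b b' -> lsubst W W' -> smf_subst (plug f (b, W)) (plug f' (b', W')).

Lemma msubst_refl s : msubst s s.
Proof. exists s, 0. split; mset_eq. Qed.

Lemma msubst_union a a' b b' : msubst a a' -> msubst b b' -> msubst (munion a b) (munion a' b').
Proof.
  intros [r1 [k1 [-> ->]]] [r2 [k2 [-> ->]]]. exists (munion r1 r2), (k1 + k2).
  split; apply functional_extensionality; intro x; unfold munion, mscale; nia.
Qed.

Lemma msubst_union_inv z a s' : msubst (munion z a) s' ->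
  exists z' a', s' = munion z' a' /\ msubst z z' /\ msubst a a'.
Proof.
  intros [r [k [E ->]]].
  assert (Ex : forall x, z x + a x = r x + k * mset1 A x) by (intro x; exact (f_equal (fun g => g x) E)).
  set (k1 := Nat.min k (z A)). set (k2 := k - k1).
  assert (HA := Ex A). unfold mset1 in HA. destruct (formula_eq_dec A A) as [_|n]; [|congruence].
  exists (munion (fun x => z x - k1 * mset1 A x) (mscale k1 xi)),
         (munion (fun x => a x - k2 * mset1 A x) (mscale k2 xi)).
  split; [|split].
  - apply functional_extensionality; intro x. unfold munion, mscale.
    specialize (Ex x). unfold mset1 in *. destruct (formula_eq_dec A x); subst; nia.
  - exists (fun x => z x - k1 * mset1 A x), k1. split; [|reflexivity].
    apply functional_extensionality; intro x. unfold munion, mscale, mset1.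
    destruct (formula_eq_dec A x); subst; nia.
  - exists (fun x => a x - k2 * mset1 A x), k2. split; [|reflexivity].
    apply functional_extensionality; intro x. unfold munion, mscale, mset1.
    destruct (formula_eq_dec A x); subst; nia.
Qed.

Lemma msubst0_inv s' : msubst mset0 s' -> s' = mset0.
Proof.
  intros [r [k [E ->]]].
  assert (Ex : forall x, 0 = r x + k * mset1 A x) by (intro x; exact (f_equal (fun g => g x) E)).
  assert (HA := Ex A). unfold mset1 in HA. destruct (formula_eq_dec A A) as [_|n]; [|congruence].
  apply functional_extensionality; intro x. unfold munion, mscale, mset0. specialize (Ex x). nia.
Qed.

Lemma msubst1_inv B s' : msubst (mset1 B) s' -> s' = mset1 B \/ (B = A /\ s' = xi).
Proof.
  intros [r [k [E ->]]].
  assert (Ex : forall x, mset1 B x = r x + k * mset1 A x) by (intro x; exact (f_equal (fun g => g x) E)).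
  assert (HA := Ex A). unfold mset1 in HA at 2. destruct (formula_eq_dec A A) as [_|n]; [|congruence].
  unfold mset1 in HA. destruct k as [|[|k]].
  - left. apply functional_extensionality; intro x. unfold munion, mscale. specialize (Ex x). lia.
  - destruct (formula_eq_dec B A) as [->|n]; [|lia].
    right. split; [reflexivity|]. apply functional_extensionality; intro x. unfold munion, mscale.
    specialize (Ex x). unfold mset1 in Ex. destruct (formula_eq_dec A x); subst; lia.
  - destruct (formula_eq_dec B A); lia.
Qed.

Lemma msubst_neq0 s s' : xi <> mset0 -> msubst s s' -> s <> mset0 -> s' <> mset0.
Proof.
  intros Hxi [r [k [-> ->]]] Hs E.
  assert (Ex : forall x, r x + k * xi x = 0) by (intro x; exact (f_equal (fun g => g x) E)).
  destruct k.
  - apply Hs. apply functional_extensionality; intro x. unfold munion, mscale, mset0.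
    specialize (Ex x). lia.
  - apply Hxi. apply functional_extensionality; intro x. unfold mset0. specialize (Ex x). nia.
Qed.

Lemma lsubst_app L1 L1' L2 L2' : lsubst L1 L1' -> lsubst L2 L2' -> lsubst (L1 ++ L2) (L1' ++ L2').
Proof. induction 1; simpl; auto using lsubst_cons. Qed.

Lemma lsubst_app_inv L1 L2 L' : lsubst (L1 ++ L2) L' ->
  exists L1' L2', L' = L1' ++ L2' /\ lsubst L1 L1' /\ lsubst L2 L2'.
Proof.
  revert L'; induction L1 as [|t L1 IH]; intros L' H; simpl in *.
  - exists [], L'. repeat split; auto using lsubst_nil.
  - inversion H as [|? t' ? L'' Ht HL]; subst. destruct (IH _ HL) as [L1' [L2' [-> [? ?]]]].
    exists (t' :: L1'), L2'. repeat split; auto using lsubst_cons.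
Qed.

Lemma lsubst_cons_inv t L L' : lsubst (t :: L) L' ->
  exists t' L'', L' = t' :: L'' /\ tsubst t t' /\ lsubst L L''.
Proof. intros H; inversion H; subst; eauto. Qed.

Lemma lsubst_nil_inv L' : lsubst [] L' -> L' = [].
Proof. intros H; inversion H; reflexivity. Qed.

Lemma tsubst_F_inv B t' : tsubst (SF B) t' -> t' = SF B.
Proof. intros H; inversion H; reflexivity. Qed.

Lemma tsubst_B_inv s L t' : tsubst (SB s L) t' ->
  exists s' L', t' = SB s' L' /\ msubst s s' /\ lsubst L L'.
Proof. intros H; inversion H; subst; eauto. Qed.

Lemma lsubst_F_cons_inv B L L' : lsubst (SF B :: L) L' -> exists L'', L' = SF B :: L'' /\ lsubst L L''.
Proof.
  intros H. destruct (lsubst_cons_inv _ _ _ H) as [t' [L'' [-> [Ht HL]]]].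
  apply tsubst_F_inv in Ht. subst. eauto.
Qed.

Lemma lsubst_single_F_inv B L' : lsubst [SF B] L' -> L' = [SF B].
Proof. intros H. destruct (lsubst_F_cons_inv _ _ _ H) as [L'' [-> ->%lsubst_nil_inv]]. reflexivity. Qed.

Fixpoint tsubst_refl (t : stt) : tsubst t t :=
  match t with
  | SF B => tsubst_F B
  | SB s L => tsubst_B s s L L (msubst_refl s)
      ((fix lsubst_refl (L : list stt) : lsubst L L :=
          match L with
          | [] => lsubst_nil
          | t :: L => lsubst_cons t t L L (tsubst_refl t) (lsubst_refl L)
          end) L)
  end.

Lemma lsubst_refl L : lsubst L L.
Proof. induction L; constructor; auto using tsubst_refl. Qed.

Lemma frame_subst_refl f : frame_subst f f.
Proof.
  destruct f as [K z D1 D2]. induction K as [|s E1 K IH E2]; intros b b' W W' Hb HW.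
  - split; simpl; auto using msubst_union, msubst_refl, lsubst_app, lsubst_refl.
  - destruct (IH b b' W W' Hb HW). split; simpl; [apply msubst_refl|].
    apply lsubst_app; [apply lsubst_refl|]. constructor; [constructor; assumption|apply lsubst_refl].
Qed.

Lemma smf_subst_plug_inv f Y T' : smf_subst (plug f Y) T' ->
  exists f' Y', T' = plug f' Y' /\ smf_subst Y Y' /\ frame_subst f f'.
Proof.
  destruct f as [K z D1 D2], Y as [a Ys]. revert T'.
  induction K as [|s E1 K IH E2]; intros [s' L'] [Hs HL]; simpl in *.
  - destruct (msubst_union_inv _ _ _ Hs) as [z' [a' [-> [Hz Ha]]]].
    destruct (lsubst_app_inv _ _ _ HL) as [D1' [R [-> [HD1 HR]]]].
    destruct (lsubst_app_inv _ _ _ HR) as [Y' [D2' [-> [HY HD2]]]].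
    exists (Fr SHole z' D1' D2'), (a', Y'). split; [reflexivity|split; [split; assumption|]].
    intros b b' W W' Hb HW. split; simpl; auto using msubst_union, lsubst_app.
  - destruct (lsubst_app_inv _ _ _ HL) as [E1' [R [-> [HE1 HR]]]].
    destruct (lsubst_cons_inv _ _ _ HR) as [t' [E2' [-> [Ht HE2]]]].
    destruct (tsubst_B_inv _ _ _ Ht) as [p1 [p2 [-> [Hp1 Hp2]]]].
    destruct (IH (p1, p2)) as [f'' [Y' [E [HY HF]]]]; [split; assumption|].
    exists (fwrap s' E1' E2' f''), Y'. split; [|split; [assumption|]].
    + rewrite plug_fwrap, <- E. reflexivity.
    + intros b b' W W' Hb HW. rewrite plug_fwrap. destruct (HF b b' W W' Hb HW).
      split; simpl; [assumption|].
      apply lsubst_app; [assumption|]. constructor; [constructor|]; assumption.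
Qed.

Hypothesis cut_A : cut_admissible A.
Hypothesis xi_neq0 : xi <> mset0.
Hypothesis der_xi : S_der (xi, []) A.

Lemma S_der_stoup_subst T D : S_der T D -> forall T', smf_subst T T' -> S_der T' D.
Proof.
  induction 1 as [A0| |f z1 G B C D dR1 IH1 dR2 IH2|z G B C dR IH|f z1 G A' C D dR1 IH1 dR2 IH2
    |z G A' C dR IH|f A1 A2 D dR IH|z1 De z2 G A1 A2 dR1 IH1 dR2 IH2|f D dR IH
    |f A1 A2 D dR1 IH1 dR2 IH2|Y A1 A2 dR IH|Y A1 A2 dR IH|f A1 A2 D dR IH|f A1 A2 D dR IH
    |Y A1 A2 dR1 IH1 dR2 IH2|f A' D dR IH|Y A' dR IH|f A' D dR IH|Y A' dR IH|f A' D dR IH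
    |f A' D dR IH|z B nz dR IH|f z2 z' G2 D nz dR IH]; intros T' HS;
  try (destruct (smf_subst_plug_inv _ _ _ HS) as [f' [[a' Y'] [-> [[Ha HY] HF]]]];
       simpl in Ha, HY);
  try (destruct T' as [s' L']; destruct HS as [Hs HL]; simpl in Hs, HL);
  try (apply msubst0_inv in Ha; subst a');
  try (apply msubst0_inv in Hs; subst s').
  - apply lsubst_single_F_inv in HL; subst. constructor.
  - apply lsubst_nil_inv in HL; subst. constructor.
  - destruct (lsubst_F_cons_inv _ _ _ HY) as [G' [-> HG]]. apply S_overL.
    + apply IH1. split; assumption.
    + apply IH2, HF; [apply msubst_refl|apply lsubst_refl].
  - apply S_overR, IH. split; [assumption|]. apply lsubst_app; [assumption|apply lsubst_refl].
  - destruct (lsubst_app_inv _ _ _ HY) as [G' [R [-> [HG ->%lsubst_single_F_inv]]]].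
    apply S_underL.
    + apply IH1. split; assumption.
    + apply IH2, HF; [apply msubst_refl|apply lsubst_refl].
  - apply S_underR, IH. split; [assumption|]. constructor; [apply tsubst_refl|assumption].
  - apply lsubst_single_F_inv in HY; subst.
    apply S_prodL, IH, HF; [apply msubst_refl|apply lsubst_refl].
  - destruct (msubst_union_inv _ _ _ Hs) as [a1 [a2 [-> [H1 H2]]]].
    destruct (lsubst_app_inv _ _ _ HL) as [L1 [L2 [-> [HL1 HL2]]]].
    apply S_prodR; [apply IH1|apply IH2]; split; assumption.
  - apply lsubst_single_F_inv in HY; subst.
    apply S_oneL, IH, HF; [apply msubst_refl|apply lsubst_refl].
  - apply lsubst_single_F_inv in HY; subst.
    apply S_orL; [apply IH1|apply IH2]; apply HF; auto using msubst_refl, lsubst_refl.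
  - apply S_orR1, IH. split; assumption.
  - apply S_orR2, IH. split; assumption.
  - apply lsubst_single_F_inv in HY; subst.
    apply S_andL1, IH, HF; [apply msubst_refl|apply lsubst_refl].
  - apply lsubst_single_F_inv in HY; subst.
    apply S_andL2, IH, HF; [apply msubst_refl|apply lsubst_refl].
  - apply S_andR; [apply IH1|apply IH2]; split; assumption.
  - destruct (lsubst_cons_inv _ _ _ HY) as [t' [L'' [-> [Ht ->%lsubst_nil_inv]]]].
    destruct (tsubst_B_inv _ _ _ Ht) as [s' [L' [-> [->%msubst0_inv ->%lsubst_single_F_inv]]]].
    apply S_boxL, IH, HF; [apply msubst_refl|apply lsubst_refl].
  - apply S_boxR, IH. split; [apply msubst_refl|]. repeat constructor; assumption.
  - apply lsubst_single_F_inv in HY; subst.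
    apply S_diamL, IH, HF; [apply msubst_refl|apply lsubst_refl].
  - destruct (lsubst_cons_inv _ _ _ HL) as [t' [L'' [-> [Ht ->%lsubst_nil_inv]]]].
    destruct (tsubst_B_inv _ _ _ Ht) as [p1 [p2 [-> [Hp1 Hp2]]]].
    apply (S_diamR (p1, p2)), IH. split; assumption.
  - apply lsubst_single_F_inv in HY; subst.
    apply S_bangL, IH, HF; [apply msubst_refl|constructor].
  - apply lsubst_nil_inv in HY; subst. destruct (msubst1_inv _ _ Ha) as [->|[-> ->]].
    + apply S_bangP, IH, HF; [apply msubst_refl|apply lsubst_refl].
    + apply cut_A; [exact der_xi|]. apply IH, HF; [apply msubst_refl|apply lsubst_refl].
  - apply lsubst_nil_inv in HL; subst. apply S_bangR.
    + exact (msubst_neq0 z s' xi_neq0 Hs nz).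
    + apply IH. split; [assumption|constructor].
  - destruct (msubst_union_inv _ _ _ Ha) as [a2 [a3 [-> [H2 H3]]]]. apply S_bangC.
    + exact (msubst_neq0 z2 a2 xi_neq0 H2 nz).
    + apply IH, HF; [assumption|]. repeat constructor; auto using msubst_union.
Qed.

End StoupSubstitution.

Definition left_rules_admissible (A : formula) (X : smf) : Prop :=
  match A with
  | Var _ => True
  | One => forall f D, S_der (plug f (mset0, [])) D -> S_der (plug f X) D
  | Over C B => forall f z1 G D, S_der (z1, G) B -> S_der (plug f (mset0, [SF C])) D ->
      S_der (plug f (munion z1 (fst X), snd X ++ G)) D
  | Under B C => forall f z1 G D, S_der (z1, G) B -> S_der (plug f (mset0, [SF C])) D ->
      S_der (plug f (munion z1 (fst X), G ++ snd X)) D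
  | Prod A1 A2 => forall f D, S_der (plug f (mset0, [SF A1; SF A2])) D -> S_der (plug f X) D
  | Or A1 A2 => forall f D, S_der (plug f (mset0, [SF A1])) D ->
      S_der (plug f (mset0, [SF A2])) D -> S_der (plug f X) D
  | And A1 A2 => forall f D,
      S_der (plug f (mset0, [SF A1])) D \/ S_der (plug f (mset0, [SF A2])) D -> S_der (plug f X) D
  | BoxI B => forall f D, S_der (plug f (mset0, [SF B])) D -> S_der (plug f (mset0, [sbr X])) D
  | Diam B => forall f D, S_der (plug f (mset0, [SB mset0 [SF B]])) D -> S_der (plug f X) D
  | Bang B => forall f D, S_der (plug f (mset1 B, [])) D -> S_der (plug f X) D
  end.

Ltac single_left_rule_case rule :=
  match goal with
  | Heq : plug ?f ?Y = plugF ?H ?A, ph : left_rules_admissible _ ?X |- _ =>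
    destruct (plug_nested_or_disjoint _ _ _ _ Heq) as [[H0 [HY HX]]|Hd];
    [ rewrite HX; symmetry in HY;
      destruct (plugF_single_inv _ _ _ _ HY) as [-> HX0];
      rewrite HX0, munion0s, <- smf_eta; apply ph; auto
    | let f' := fresh "f'" in let E := fresh "E" in let Hf := fresh "Hf" in
      destruct (disjoint_fill _ _ _ _ X Hd) as [f' [E Hf]]; rewrite E;
      apply rule; apply Hf; assumption ]
  end.

Lemma cut_by_left_rules A X : S_der X A -> left_rules_admissible A X ->
  forall T D, S_der T D -> forall H, T = plugF H A -> S_der (plug H X) D.
Proof.
  intros dL ph T D0 dR.
  induction dR as [A0| |f z1 G B C D dR1 IH1 dR2 IH2|z G B C dR IH|f z1 G A' C D dR1 IH1 dR2 IH2
    |z G A' C dR IH|f A1 A2 D dR IH|z1 De z2 G A1 A2 dR1 IH1 dR2 IH2|f D dR IH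
    |f A1 A2 D dR1 IH1 dR2 IH2|Y A1 A2 dR IH|Y A1 A2 dR IH|f A1 A2 D dR IH|f A1 A2 D dR IH
    |Y A1 A2 dR1 IH1 dR2 IH2|f A' D dR IH|Y A' dR IH|f A' D dR IH|Y A' dR IH|f A' D dR IH
    |f A' D dR IH|z B nz dR IH|f z2 z' G2 D nz dR IH]; intros H Heq.
  - symmetry in Heq. destruct (plugF_single_inv _ _ _ _ Heq) as [-> HX].
    rewrite HX, munion0s, <- smf_eta. exact dL.
  - symmetry in Heq. destruct (plugF_neq_nil _ _ _ Heq).
  - destruct (plug_nested_or_disjoint _ _ _ _ Heq) as [[H0 [HY HX]]|Hd].
    + rewrite HX.
      assert (E : plugF H0 A = (munion mset0 z1, [SF (Over C B)] ++ G))
        by (rewrite <- HY, munion0s; reflexivity).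
      destruct (plugF_app_inv _ _ _ _ _ _ E) as [[H1 [E1 F1]]|[H2 [E2 F2]]].
      * destruct (plugF_single_inv _ _ _ _ E1) as [-> G1]. rewrite F1, G1.
        eapply S_der_eq; [apply (ph f z1 G D dR1 dR2)|plug_eq].
      * rewrite F2. eapply S_der_eq.
        -- apply S_overL with (z1 := fst (plug H2 X)) (G := snd (plug H2 X)); [|exact dR2].
           rewrite <- smf_eta. exact (IH1 H2 (eq_sym E2)).
        -- plug_eq.
    + destruct (disjoint_fill _ _ _ _ X Hd) as [f' [E Hf]]. rewrite E.
      apply S_overL; [exact dR1|]. apply Hf, IH2.
  - rewrite (smf_eta (plug H X)). apply S_overR. rewrite <- plug_fapp_r. apply IH.
    unfold plugF. rewrite plug_fapp_r. fold (plugF H A). rewrite <- Heq. reflexivity.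
  - destruct (plug_nested_or_disjoint _ _ _ _ Heq) as [[H0 [HY HX]]|Hd].
    + rewrite HX.
      assert (E : plugF H0 A = (munion z1 mset0, G ++ [SF (Under A' C)]))
        by (rewrite <- HY, munions0; reflexivity).
      destruct (plugF_app_inv _ _ _ _ _ _ E) as [[H1 [E1 F1]]|[H2 [E2 F2]]].
      * rewrite F1. eapply S_der_eq.
        -- apply S_underL with (z1 := fst (plug H1 X)) (G := snd (plug H1 X)); [|exact dR2].
           rewrite <- smf_eta. exact (IH1 H1 (eq_sym E1)).
        -- plug_eq.
      * destruct (plugF_single_inv _ _ _ _ E2) as [-> G2]. rewrite F2, G2.
        eapply S_der_eq; [apply (ph f z1 G D dR1 dR2)|plug_eq].
    + destruct (disjoint_fill _ _ _ _ X Hd) as [f' [E Hf]]. rewrite E.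
      apply S_underL; [exact dR1|]. apply Hf, IH2.
  - rewrite (smf_eta (plug H X)). apply S_underR.
    change (SF A' :: snd (plug H X)) with ([SF A'] ++ snd (plug H X)).
    rewrite <- plug_fapp_l. apply IH.
    unfold plugF. rewrite plug_fapp_l. fold (plugF H A). rewrite <- Heq. reflexivity.
  - single_left_rule_case S_prodL.
  - symmetry in Heq. destruct (plugF_app_inv _ _ _ _ _ _ Heq) as [[H1 [E1 F1]]|[H2 [E2 F2]]].
    + rewrite F1. apply S_prodR; [|exact dR2]. rewrite <- smf_eta. exact (IH1 H1 (eq_sym E1)).
    + rewrite F2. apply S_prodR; [exact dR1|]. rewrite <- smf_eta. exact (IH2 H2 (eq_sym E2)).
  - single_left_rule_case S_oneL.
  - single_left_rule_case S_orL.
  - apply S_orR1, IH, Heq.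
  - apply S_orR2, IH, Heq.
  - single_left_rule_case S_andL1.
  - single_left_rule_case S_andL2.
  - apply S_andR; [apply IH1|apply IH2]; exact Heq.
  - destruct (plug_nested_or_disjoint _ _ _ _ Heq) as [[H0 [HY HX]]|Hd].
    + rewrite HX. symmetry in HY. destruct (plugF_bracket_inv _ _ _ _ _ HY) as [H1 [E1 F1]].
      destruct (plugF_single_inv _ _ _ _ E1) as [-> G1]. rewrite F1, G1, munion0s, <- smf_eta.
      exact (ph f D dR).
    + destruct (disjoint_fill _ _ _ _ X Hd) as [f' [E Hf]]. rewrite E. apply S_boxL, Hf, IH.
  - apply S_boxR. assert (E := plug_fwrap mset0 [] [] H X). simpl in E. rewrite <- E. apply IH.
    unfold plugF. rewrite plug_fwrap. fold (plugF H A). rewrite <- Heq. reflexivity.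
  - single_left_rule_case S_diamL.
  - symmetry in Heq. destruct (plugF_bracket_inv _ _ _ _ _ Heq) as [H1 [E1 F1]].
    rewrite F1. apply S_diamR, IH. rewrite E1. apply smf_eta.
  - single_left_rule_case S_bangL.
  - destruct (plug_nested_or_disjoint _ _ _ _ Heq) as [[H0 [HY HX]]|Hd].
    + symmetry in HY. destruct (plugF_neq_nil _ _ _ HY).
    + destruct (disjoint_fill _ _ _ _ X Hd) as [f' [E Hf]]. rewrite E. apply S_bangP, Hf, IH.
  - symmetry in Heq. destruct (plugF_neq_nil _ _ _ Heq).
  - destruct (plug_nested_or_disjoint _ _ _ _ Heq) as [[H0 [HY HX]]|Hd].
    + rewrite HX. symmetry in HY. destruct (plugF_into_bracket _ _ _ _ _ HY) as [H0' [E1 F1]].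
      destruct (F1 X) as [z'' [G'' [F2 F3]]]. rewrite F2.
      apply S_bangC; [exact nz|]. rewrite <- F3, <- plug_fcomp. apply IH.
      unfold plugF. rewrite plug_fcomp. fold (plugF H0' A). rewrite E1. reflexivity.
    + destruct (disjoint_fill _ _ _ _ X Hd) as [f' [E Hf]]. rewrite E.
      apply S_bangC; [exact nz|]. apply Hf, IH.
Qed.

Lemma principal_overR z G B C : S_der (z, G ++ [SF B]) C ->
  cut_admissible B -> cut_admissible C -> left_rules_admissible (Over C B) (z, G).
Proof.
  intros d cutB cutC f z1 G' D d1 d2.
  assert (d3 : S_der (plug (Fr SHole z G []) (z1, G')) C).
  { apply (cutB _ d1). eapply S_der_eq; [exact d|]. smf_eq. }
  eapply S_der_eq; [apply (cutC _ d3 f D d2)|plug_eq].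
Qed.

Lemma principal_underR z G A C : S_der (z, SF A :: G) C ->
  cut_admissible A -> cut_admissible C -> left_rules_admissible (Under A C) (z, G).
Proof.
  intros d cutA cutC f z1 G' D d1 d2.
  assert (d3 : S_der (plug (Fr SHole z [] G) (z1, G')) C).
  { apply (cutA _ d1). eapply S_der_eq; [exact d|]. smf_eq. }
  eapply S_der_eq; [apply (cutC _ d3 f D d2)|plug_eq].
Qed.

Lemma principal_prodR z1 De z2 G A1 A2 : S_der (z1, De) A1 -> S_der (z2, G) A2 ->
  cut_admissible A1 -> cut_admissible A2 -> left_rules_admissible (Prod A1 A2) (munion z1 z2, De ++ G).
Proof.
  intros d1 d2 cut1 cut2 [K z D1 D2] D d.
  assert (d3 : S_der (plug (Fr K z D1 (SF A2 :: D2)) (z1, De)) D).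
  { apply (cut1 _ d1). eapply S_der_eq; [exact d|]. plug_eq. }
  assert (d4 : S_der (plug (Fr K (munion z z1) (D1 ++ De) D2) (z2, G)) D).
  { apply (cut2 _ d2). eapply S_der_eq; [exact d3|]. plug_eq. }
  eapply S_der_eq; [exact d4|]. plug_eq.
Qed.

Lemma principal_oneR : left_rules_admissible One (mset0, []).
Proof. intros f D d. exact d. Qed.

Lemma principal_orR1 X A1 A2 : S_der X A1 -> cut_admissible A1 -> left_rules_admissible (Or A1 A2) X.
Proof. intros dX cut1 f D d1 _. exact (cut1 X dX f D d1). Qed.

Lemma principal_orR2 X A1 A2 : S_der X A2 -> cut_admissible A2 -> left_rules_admissible (Or A1 A2) X.
Proof. intros dX cut2 f D _ d2. exact (cut2 X dX f D d2). Qed.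

Lemma principal_andR X A1 A2 : S_der X A1 -> S_der X A2 ->
  cut_admissible A1 -> cut_admissible A2 -> left_rules_admissible (And A1 A2) X.
Proof. intros dX1 dX2 cut1 cut2 f D [d|d]; [exact (cut1 X dX1 f D d)|exact (cut2 X dX2 f D d)]. Qed.

Lemma principal_boxR X A : S_der (mset0, [sbr X]) A -> cut_admissible A ->
  left_rules_admissible (BoxI A) X.
Proof. intros dX cutA f D d. exact (cutA _ dX f D d). Qed.

Lemma principal_diamR Y A : S_der Y A -> cut_admissible A ->
  left_rules_admissible (Diam A) (mset0, [sbr Y]).
Proof.
  intros dY cutA f D d. rewrite <- plug_fbracket, <- plug_fcomp. apply (cutA Y dY).
  unfold plugF. rewrite plug_fcomp, plug_fbracket. exact d.
Qed.

Lemma principal_bangR z B : z <> mset0 -> S_der (z, []) B -> cut_admissible B ->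
  left_rules_admissible (Bang B) (z, []).
Proof.
  intros nz dz cutB f D d. apply (S_der_stoup_subst B z cutB nz dz _ _ d).
  apply frame_subst_refl; [|constructor]. exists mset0, 1. split; mset_eq.
Qed.

Fixpoint fsize (A : formula) : nat :=
  match A with
  | Var _ | One => 1
  | Under A1 A2 | Over A1 A2 | Prod A1 A2 | And A1 A2 | Or A1 A2 => S (fsize A1 + fsize A2)
  | Diam A1 | BoxI A1 | Bang A1 => S (fsize A1)
  end.

Ltac commute_left_rule rule :=
  rewrite <- plug_fcomp; apply rule; try assumption; rewrite plug_fcomp;
  match goal with
  | IH : _ -> forall H E, _ -> S_der (plug H ?Y) E |- S_der (plug _ ?Y) _ => apply IH; assumption
  end.

Ltac subformula_cut :=
  match goal with sub : forall B, fsize B < _ -> cut_admissible B |- _ => apply sub; simpl; lia end.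

Tactic Notation "principal_cut" uconstr(d) uconstr(ph) :=
  match goal with
  | dC : S_der (plugF ?H _) _ |- _ => refine (cut_by_left_rules _ _ d ph _ _ dC H eq_refl); subformula_cut
  end.

Lemma cut_admissible_step X D : S_der X D -> (forall B, fsize B < fsize D -> cut_admissible B) ->
  forall H E, S_der (plugF H D) E -> S_der (plug H X) E.
Proof.
  induction 1 as [A0| |f z1 G B C D dR1 IH1 dR2 IH2|z G B C dR IH|f z1 G A' C D dR1 IH1 dR2 IH2
    |z G A' C dR IH|f A1 A2 D dR IH|z1 De z2 G A1 A2 dR1 IH1 dR2 IH2|f D dR IH
    |f A1 A2 D dR1 IH1 dR2 IH2|Y A1 A2 dR IH|Y A1 A2 dR IH|f A1 A2 D dR IH|f A1 A2 D dR IH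
    |Y A1 A2 dR1 IH1 dR2 IH2|f A' D dR IH|Y A' dR IH|f A' D dR IH|Y A' dR IH|f A' D dR IH
    |f A' D dR IH|z B nz dR IH|f z2 z' G2 D nz dR IH]; intros sub H E dC.
  - exact dC.
  - principal_cut S_oneR principal_oneR.
  - commute_left_rule S_overL.
  - principal_cut (S_overR _ _ _ _ dR) (principal_overR _ _ _ _ dR _ _).
  - commute_left_rule S_underL.
  - principal_cut (S_underR _ _ _ _ dR) (principal_underR _ _ _ _ dR _ _).
  - commute_left_rule S_prodL.
  - principal_cut (S_prodR _ _ _ _ _ _ dR1 dR2) (principal_prodR _ _ _ _ _ _ dR1 dR2 _ _).
  - commute_left_rule S_oneL.
  - commute_left_rule S_orL.
  - principal_cut (S_orR1 _ _ _ dR) (principal_orR1 _ _ _ dR _).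
  - principal_cut (S_orR2 _ _ _ dR) (principal_orR2 _ _ _ dR _).
  - commute_left_rule S_andL1.
  - commute_left_rule S_andL2.
  - principal_cut (S_andR _ _ _ dR1 dR2) (principal_andR _ _ _ dR1 dR2 _ _).
  - commute_left_rule S_boxL.
  - principal_cut (S_boxR _ _ dR) (principal_boxR _ _ dR _).
  - commute_left_rule S_diamL.
  - principal_cut (S_diamR _ _ dR) (principal_diamR _ _ dR _).
  - commute_left_rule S_bangL.
  - commute_left_rule S_bangP.
  - principal_cut (S_bangR _ _ nz dR) (principal_bangR _ _ nz dR _).
  - commute_left_rule S_bangC.
Qed.

Theorem S_cut A : cut_admissible A.
Proof.
  induction A as [A IH] using (well_founded_induction (well_founded_ltof _ fsize)).
  intros X dX. exact (cut_admissible_step X A dX IH).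
Qed.

(** * From F to S *)

Fixpoint stt_of_ftt (t : ftt) : stt :=
  match t with FF A => SF A | FB L => SB mset0 (map stt_of_ftt L) end.

Fixpoint sctx_of_fctx (K : fctx) : sctx :=
  match K with
  | FHole => SHole
  | FIn G1 K' G2 => SIn mset0 (map stt_of_ftt G1) (sctx_of_fctx K') (map stt_of_ftt G2)
  end.

Definition smf_of_flist (L : list ftt) : smf := (mset0, map stt_of_ftt L).

Definition frame_of_fctx (K : fctx) (D1 D2 : list ftt) : frame :=
  Fr (sctx_of_fctx K) mset0 (map stt_of_ftt D1) (map stt_of_ftt D2).

Lemma smf_of_ffill K D1 Y D2 :
  smf_of_flist (ffill K (D1 ++ Y ++ D2)) = plug (frame_of_fctx K D1 D2) (smf_of_flist Y).
Proof.
  unfold frame_of_fctx, plug. simpl. rewrite munions0.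
  induction K as [|G1 K IH G2]; unfold smf_of_flist in *; simpl; rewrite !map_app; [reflexivity|].
  rewrite <- IH. reflexivity.
Qed.

Ltac smf_simpl := unfold plug, smf_of_flist, sbr; simpl; rewrite ?map_app; simpl;
  rewrite ?map_app, ?munion0s, ?munions0.

Lemma S_stoup_ax A : S_der (mset1 A, []) A.
Proof.
  eapply S_der_eq; [apply (S_bangP (Fr SHole mset0 [] []))|smf_simpl; reflexivity].
  eapply S_der_eq; [apply S_ax|smf_simpl; reflexivity].
Qed.

Lemma S_bangL_inv f A C : S_der (plug f (mset0, [SF (Bang A)])) C -> S_der (plug f (mset1 A, [])) C.
Proof.
  apply (S_cut (Bang A) (mset1 A, [])). apply S_bangR; [apply mset1_neq0|apply S_stoup_ax].
Qed.

Lemma map_stt_of_fbangs As : map stt_of_ftt (fbangs As) = map (fun A => SF (Bang A)) As.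
Proof. unfold fbangs. rewrite map_map. reflexivity. Qed.

Lemma S_bangs_to_stoup As f C :
  S_der (plug f (smf_of_flist (fbangs As))) C -> S_der (plug f (mset_of_list As, [])) C.
Proof.
  unfold smf_of_flist. rewrite map_stt_of_fbangs. revert f.
  induction As as [|A As IH]; intros [K z D1 D2] d; [exact d|].
  assert (d1 : S_der (plug (Fr K z D1 (map (fun A => SF (Bang A)) As ++ D2)) (mset1 A, [])) C).
  { apply S_bangL_inv. eapply S_der_eq; [exact d|]. smf_simpl. reflexivity. }
  assert (d2 : S_der (plug (Fr K (munion z (mset1 A)) D1 D2) (mset_of_list As, [])) C).
  { apply IH. eapply S_der_eq; [exact d1|]. plug_eq. }
  eapply S_der_eq; [exact d2|]. rewrite mset_of_list_cons. plug_eq.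
Qed.

Lemma S_stoup_to_bangs As f C :
  S_der (plug f (mset_of_list As, [])) C -> S_der (plug f (smf_of_flist (fbangs As))) C.
Proof.
  unfold smf_of_flist. rewrite map_stt_of_fbangs. revert f.
  induction As as [|A As IH]; intros [K z D1 D2] d; [exact d|].
  assert (d1 : S_der (plug (Fr K (munion z (mset1 A)) D1 D2) (mset0, map (fun A => SF (Bang A)) As)) C).
  { apply IH. eapply S_der_eq; [exact d|]. rewrite mset_of_list_cons. plug_eq. }
  assert (d2 : S_der (plug (Fr K z D1 (map (fun A => SF (Bang A)) As ++ D2)) (mset0, [SF (Bang A)])) C).
  { apply S_bangL. eapply S_der_eq; [exact d1|]. plug_eq. }
  eapply S_der_eq; [exact d2|]. smf_simpl. reflexivity.
Qed.

Lemma smf_of_ffill1 K D1 t D2 :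
  smf_of_flist (ffill K (D1 ++ t :: D2)) = plug (frame_of_fctx K D1 D2) (mset0, [stt_of_ftt t]).
Proof. exact (smf_of_ffill K D1 [t] D2). Qed.

Lemma S_bang_move K D1 D2 D1' D2' A C : D1 ++ D2 = D1' ++ D2' ->
  S_der (smf_of_flist (ffill K (D1 ++ FF (Bang A) :: D2))) C ->
  S_der (smf_of_flist (ffill K (D1' ++ FF (Bang A) :: D2'))) C.
Proof.
  intros E d. rewrite smf_of_ffill1 in *. apply S_bangL. apply S_bangL_inv in d.
  eapply S_der_eq; [exact d|]. unfold frame_of_fctx, plug; simpl. rewrite <- !map_app, E. reflexivity.
Qed.

Lemma S_bangR_list As B : As <> [] ->
  S_der (smf_of_flist (fbangs As)) B -> S_der (smf_of_flist (fbangs As)) (Bang B).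
Proof.
  intros nz d.
  assert (d1 : S_der (plug (Fr SHole mset0 [] []) (mset_of_list As, [])) B).
  { apply S_bangs_to_stoup. eapply S_der_eq; [exact d|]. smf_simpl. rewrite app_nil_r. reflexivity. }
  assert (d2 : S_der (mset_of_list As, []) (Bang B)).
  { apply S_bangR; [apply mset_of_list_neq0, nz|]. eapply S_der_eq; [exact d1|]. smf_simpl. reflexivity. }
  assert (d3 : S_der (plug (Fr SHole mset0 [] []) (smf_of_flist (fbangs As))) (Bang B)).
  { apply S_stoup_to_bangs. eapply S_der_eq; [exact d2|]. smf_simpl. reflexivity. }
  eapply S_der_eq; [exact d3|]. smf_simpl. rewrite app_nil_r. reflexivity.
Qed.

Lemma S_bangC_list K As G1 G2 G3 C : As <> [] ->
  S_der (smf_of_flist (ffill K (fbangs As ++ G1 ++ FB (fbangs As ++ G2) :: G3))) C ->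
  S_der (smf_of_flist (ffill K (fbangs As ++ G1 ++ G2 ++ G3))) C.
Proof.
  intros nz d. set (sK := sctx_of_fctx K). set (m := map stt_of_ftt).
  rewrite <- (app_nil_l (fbangs As ++ _)), smf_of_ffill in d. apply S_bangs_to_stoup in d.
  assert (d1 : S_der (plug (Fr (scomp sK (SIn (mset_of_list As) (m G1) SHole (m G3))) mset0 [] (m G2))
                           (smf_of_flist (fbangs As))) C).
  { eapply S_der_eq; [exact d|]. unfold plug, frame_of_fctx. rewrite sfill_scomp. smf_simpl. reflexivity. }
  apply S_bangs_to_stoup in d1.
  assert (d2 : S_der (plug (Fr sK mset0 (m G1) (m G3)) (munion (mset_of_list As) mset0, m G2)) C).
  { apply S_bangC; [apply mset_of_list_neq0, nz|]. eapply S_der_eq; [exact d1|].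
    unfold plug. rewrite sfill_scomp. smf_simpl. reflexivity. }
  rewrite <- (app_nil_l (fbangs As ++ _)), smf_of_ffill. apply S_stoup_to_bangs.
  eapply S_der_eq; [exact d2|]. unfold frame_of_fctx. smf_simpl. reflexivity.
Qed.

Ltac from_ffill IH Y := exact (S_der_eq _ _ _ IH (smf_of_ffill _ _ Y _)).

Lemma S_der_of_F_der c X C : F_der c X C -> S_der (smf_of_flist X) C.
Proof.
  induction 1 as [A| |K G B D1 C D2 D d1 IH1 d2 IH2|G B C d IH|K G A D1 C D2 D d1 IH1 d2 IH2
    |G A C d IH|K D1 A B D2 D d IH|De G A B d1 IH1 d2 IH2|K D1 D2 A d IH
    |K D1 A1 A2 D2 C d1 IH1 d2 IH2|X A1 A2 d IH|X A1 A2 d IH|K D1 A1 A2 D2 C d IH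
    |K D1 A1 A2 D2 C d IH|X A1 A2 d1 IH1 d2 IH2|K D1 A D2 B d IH|X A d IH|K D1 A D2 B d IH|X A d IH
    |K D1 A D2 C d IH|K D1 A Phi D2 C d IH|K D1 A Phi D2 C d IH|As B nz d IH|K As G1 G2 G3 C nz d IH
    |K Pi A G1 G2 C _ d1 IH1 d2 IH2].
  - apply S_ax.
  - apply S_oneR.
  - change (D1 ++ FF (Over C B) :: G ++ D2) with (D1 ++ (FF (Over C B) :: G) ++ D2).
    rewrite smf_of_ffill. apply S_overL; [exact IH1|from_ffill IH2 [FF C]].
  - apply S_overR. unfold smf_of_flist in IH. rewrite map_app in IH. exact IH.
  - replace (D1 ++ G ++ FF (Under A C) :: D2) with (D1 ++ (G ++ [FF (Under A C)]) ++ D2) by list_eq.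
    rewrite smf_of_ffill. unfold smf_of_flist at 1. rewrite map_app.
    apply S_underL; [exact IH1|from_ffill IH2 [FF C]].
  - apply S_underR. exact IH.
  - rewrite smf_of_ffill1. apply S_prodL. from_ffill IH [FF A; FF B].
  - eapply S_der_eq; [apply (S_prodR _ _ _ _ _ _ IH1 IH2)|].
    unfold smf_of_flist. rewrite map_app, munions0. reflexivity.
  - rewrite smf_of_ffill1. apply S_oneL. from_ffill IH (@nil ftt).
  - rewrite smf_of_ffill1. apply S_orL; [from_ffill IH1 [FF A1]|from_ffill IH2 [FF A2]].
  - apply S_orR1, IH.
  - apply S_orR2, IH.
  - rewrite smf_of_ffill1. apply S_andL1. from_ffill IH [FF A1].
  - rewrite smf_of_ffill1. apply S_andL2. from_ffill IH [FF A2].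
  - apply S_andR; assumption.
  - rewrite smf_of_ffill1. apply S_boxL. from_ffill IH [FF A].
  - apply S_boxR. exact IH.
  - rewrite smf_of_ffill1. apply S_diamL. from_ffill IH [FB [FF A]].
  - apply (S_diamR (smf_of_flist X)). exact IH.
  - rewrite smf_of_ffill1. apply S_bangL, S_bangP. from_ffill IH [FF A].
  - rewrite app_assoc. exact (S_bang_move _ _ _ _ _ _ _ (app_assoc _ _ _) IH).
  - rewrite app_assoc in IH. exact (S_bang_move _ _ _ _ _ _ _ (eq_sym (app_assoc _ _ _)) IH).
  - exact (S_bangR_list As B nz IH).
  - exact (S_bangC_list K As G1 G2 G3 C nz IH).
  - rewrite smf_of_ffill. apply (S_cut A _ IH1). from_ffill IH2 [FF A].
Qed.

(** * Between M' and S *)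

Fixpoint stt_of_mtt (t : mtt) : stt :=
  match t with MF A => SF A | MB z G => SB (mset_of_list z) (map stt_of_mtt G) end.

Definition smf_of_mf (X : mf) : smf := (mset_of_list (fst X), map stt_of_mtt (snd X)).

Fixpoint sctx_of_mctx (K : mctx) : sctx :=
  match K with
  | MHole => SHole
  | MIn z G1 K' G2 => SIn (mset_of_list z) (map stt_of_mtt G1) (sctx_of_mctx K') (map stt_of_mtt G2)
  end.

Definition frame_of_mctx (K : mctx) (z : stoup) (D1 D2 : list mtt) : frame :=
  Fr (sctx_of_mctx K) (mset_of_list z) (map stt_of_mtt D1) (map stt_of_mtt D2).

Lemma smf_of_mfill K X : smf_of_mf (mfill K X) = sfill (sctx_of_mctx K) (smf_of_mf X).
Proof.
  induction K as [|z G1 K IH G2]; [reflexivity|]. unfold smf_of_mf at 1; simpl.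
  rewrite map_app. unfold mbr. rewrite <- IH. reflexivity.
Qed.

Lemma mtt_eq_ind_nested (P : mtt -> mtt -> Prop) (hF : forall A, P (MF A) (MF A))
  (hB : forall z z' G G', Permutation z z' -> Forall2 P G G' -> P (MB z G) (MB z' G')) :
  forall t t', mtt_eq t t' -> P t t'.
Proof.
  fix IH 3. intros t t' H. destruct H as [A|z z' G G' Hp HF]; [apply hF|].
  apply hB; [exact Hp|]. clear Hp. revert G G' HF. fix IH2 3. intros G G' HF.
  destruct HF as [|x y l l' Hxy Hll]; constructor; [apply IH; exact Hxy|apply IH2; exact Hll].
Qed.

Lemma stt_of_mtt_eq t t' : mtt_eq t t' -> stt_of_mtt t = stt_of_mtt t'.
Proof.
  apply (mtt_eq_ind_nested (fun t t' => stt_of_mtt t = stt_of_mtt t')); [reflexivity|].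
  intros z z' G G' Hp HG. simpl.
  rewrite (mset_of_list_perm _ _ Hp). f_equal. induction HG; simpl; congruence.
Qed.

Lemma smf_of_mf_eq X X' : mf_eq X X' -> smf_of_mf X = smf_of_mf X'.
Proof.
  intros [Hp HF]. unfold smf_of_mf. rewrite (mset_of_list_perm _ _ Hp). f_equal.
  induction HF as [|t t' G G' Ht _ IH]; simpl; [reflexivity|].
  rewrite (stt_of_mtt_eq _ _ Ht), IH. reflexivity.
Qed.

Ltac smf_of_mf_simpl := rewrite ?smf_of_mfill;
  unfold plug, frame_of_mctx, smf_of_mf, mbr, mbr1, sbr; simpl;
  rewrite ?map_app, ?mset_of_list_app; simpl; rewrite ?map_app, ?mset_of_list_app.

Ltac mplug_eq := smf_of_mf_simpl; unfold mset_of_list; simpl; f_equal; smf_eq.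

Ltac S_from IH := eapply S_der_eq; [exact IH|mplug_eq].
Ltac S_via rule := eapply S_der_eq;
  [apply rule; match goal with IH : S_der _ _ |- _ => S_from IH end|mplug_eq].

Lemma S_der_of_M_der c X C : M_der c X C -> S_der (smf_of_mf X) C.
Proof.
  induction 1 as [X X' C d IH Heq|A| |K z1 G B z2 D1 C D2 D d1 IH1 d2 IH2|z G B C d IH
    |K z1 G A z2 D1 C D2 D d1 IH1 d2 IH2|z G A C d IH|K z D1 A B D2 D d IH
    |z1 De z2 G A B d1 IH1 d2 IH2|K z D1 D2 A d IH|K z D1 A1 A2 D2 C d1 IH1 d2 IH2|X A1 A2 d IH
    |X A1 A2 d IH|K z D1 A1 A2 D2 C d IH|K z D1 A1 A2 D2 C d IH|X A1 A2 d1 IH1 d2 IH2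
    |K z D1 A D2 B d IH|X A d IH|K z D1 A D2 B d IH|X A d IH|K z A G1 G2 B d IH|K z G1 A G2 B d IH
    |z B nz d IH|K z1 z2 z' G1 G2 G3 C nz d IH|K xi Pi A z G1 G2 C _ d1 IH1 d2 IH2].
  - rewrite <- (smf_of_mf_eq _ _ Heq). exact IH.
  - apply S_ax.
  - apply S_oneR.
  - S_via (S_overL (frame_of_mctx K z2 D1 D2) _ _ B C D IH1).
  - apply S_overR. S_from IH.
  - S_via (S_underL (frame_of_mctx K z2 D1 D2) _ _ A C D IH1).
  - apply S_underR. S_from IH.
  - S_via (S_prodL (frame_of_mctx K z D1 D2) A B D).
  - eapply S_der_eq; [apply (S_prodR _ _ _ _ _ _ IH1 IH2)|mplug_eq].
  - S_via (S_oneL (frame_of_mctx K z D1 D2) A).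
  - S_via (S_orL (frame_of_mctx K z D1 D2) A1 A2 C).
  - apply S_orR1, IH.
  - apply S_orR2, IH.
  - S_via (S_andL1 (frame_of_mctx K z D1 D2) A1 A2 C).
  - S_via (S_andL2 (frame_of_mctx K z D1 D2) A1 A2 C).
  - apply S_andR; assumption.
  - S_via (S_boxL (frame_of_mctx K z D1 D2) A B).
  - apply S_boxR. S_from IH.
  - S_via (S_diamL (frame_of_mctx K z D1 D2) A B).
  - eapply S_der_eq; [apply (S_diamR (smf_of_mf X)), IH|mplug_eq].
  - S_via (S_bangL (frame_of_mctx K z G1 G2) A B).
  - S_via (S_bangP (frame_of_mctx K z G1 G2) A B).
  - apply S_bangR; [apply mset_of_list_neq0, nz|exact IH].
  - S_via (S_bangC (frame_of_mctx K z1 G1 G3) (mset_of_list z2) (mset_of_list z') (map stt_of_mtt G2) C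
      (mset_of_list_neq0 _ nz)).
  - eapply S_der_eq; [apply (S_cut A _ IH1 (frame_of_mctx K z G1 G2))|mplug_eq]. S_from IH2.
Qed.

Lemma stt_of_mtt_F_inv t A : stt_of_mtt t = SF A -> t = MF A.
Proof. destruct t; simpl; intro H; inversion H; reflexivity. Qed.

Lemma stt_of_mtt_B_inv t s L : stt_of_mtt t = SB s L ->
  exists z G, t = MB z G /\ mset_of_list z = s /\ map stt_of_mtt G = L.
Proof. destruct t; simpl; intro H; inversion H; eauto. Qed.

Lemma map_stt_of_mtt_single_F L A : map stt_of_mtt L = [SF A] -> L = [MF A].
Proof.
  intros H. apply map_eq_cons in H as [t [L' [-> [->%stt_of_mtt_F_inv ->%map_eq_nil]]]]. reflexivity.
Qed.

Lemma smf_of_mf_sfill_inv K X s L : smf_of_mf X = sfill K (s, L) ->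
  exists KM z G, X = mfill KM (z, G) /\ sctx_of_mctx KM = K /\
    mset_of_list z = s /\ map stt_of_mtt G = L.
Proof.
  revert X; induction K as [|s' E1 K IH E2]; intros [z0 L0] E;
    unfold smf_of_mf in E; simpl in E; injection E as E1' E2'.
  - exists MHole, z0, L0. auto.
  - apply map_eq_app in E2' as [E1M [R [-> [HE1 HR]]]].
    apply map_eq_cons in HR as [t [E2M [-> [Ht HE2]]]].
    apply stt_of_mtt_B_inv in Ht as [zt [Lt [-> [Hzt HLt]]]].
    destruct (IH (zt, Lt)) as [KM [zM [LM [HX [HK [Hz HL]]]]]].
    { unfold smf_of_mf; simpl. rewrite Hzt, HLt. symmetry. apply smf_eta. }
    exists (MIn z0 E1M KM E2M), zM, LM. simpl. rewrite <- HX.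
    repeat split; auto. simpl. rewrite HK, E1', HE1, HE2. reflexivity.
Qed.

Lemma smf_of_mf_plug_inv K z D1 D2 a Y X : smf_of_mf X = plug (Fr K z D1 D2) (a, Y) ->
  exists KM zM D1M YM D2M lz la, X = mfill KM (zM, D1M ++ YM ++ D2M) /\ sctx_of_mctx KM = K /\
    Permutation zM (lz ++ la) /\ mset_of_list lz = z /\ mset_of_list la = a /\
    map stt_of_mtt D1M = D1 /\ map stt_of_mtt YM = Y /\ map stt_of_mtt D2M = D2.
Proof.
  intros E. apply smf_of_mf_sfill_inv in E as [KM [zM [LM [-> [HK [Hz HL]]]]]].
  apply map_eq_app in HL as [D1M [R [-> [HD1 HR]]]].
  apply map_eq_app in HR as [YM [D2M [-> [HY HD2]]]].
  destruct (mset_of_list_union_inv _ _ _ Hz) as [lz [la [Hp [Hlz Hla]]]].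
  exists KM, zM, D1M, YM, D2M, lz, la. repeat split; auto.
Qed.

Lemma smf_of_mf_plug K l lz b D1 W D2 : mset_of_list l = munion (mset_of_list lz) b ->
  smf_of_mf (mfill K (l, D1 ++ W ++ D2)) =
  plug (frame_of_mctx K lz D1 D2) (b, map stt_of_mtt W).
Proof. intros E. rewrite smf_of_mfill. unfold smf_of_mf; simpl. rewrite !map_app, E. reflexivity. Qed.

Fixpoint mtt_eq_refl (t : mtt) : mtt_eq t t :=
  match t with
  | MF A => mtt_eqF A
  | MB z G => mtt_eqB z z G G (Permutation_refl z)
      ((fix list_eq_refl (G : list mtt) : Forall2 mtt_eq G G :=
          match G with
          | [] => Forall2_nil _
          | t :: G => Forall2_cons t t (mtt_eq_refl t) (list_eq_refl G)
          end) G)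
  end.

Lemma Forall2_mtt_eq_refl G : Forall2 mtt_eq G G.
Proof. induction G; constructor; auto using mtt_eq_refl. Qed.

Lemma mf_eq_mfill_perm K z z' L : Permutation z z' -> mf_eq (mfill K (z, L)) (mfill K (z', L)).
Proof.
  intros Hp. induction K as [|s E1 K IH E2]; split; simpl; auto using Forall2_mtt_eq_refl.
  apply Forall2_app; [apply Forall2_mtt_eq_refl|]. constructor; [|apply Forall2_mtt_eq_refl].
  destruct IH as [H1 H2]. constructor; assumption.
Qed.

Lemma M_perm K z z' L C : Permutation z z' ->
  M_der false (mfill K (z, L)) C -> M_der false (mfill K (z', L)) C.
Proof. intros Hp d. exact (M_mset _ _ _ _ d (mf_eq_mfill_perm K z z' L Hp)). Qed.

Lemma M_der_of_empty_stoup_slot K z D1 D2 Y X C : smf_of_mf X = plug (Fr K z D1 D2) (mset0, Y) ->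
  (forall KM lz D1M YM D2M, sctx_of_mctx KM = K -> mset_of_list lz = z ->
     map stt_of_mtt D1M = D1 -> map stt_of_mtt YM = Y -> map stt_of_mtt D2M = D2 ->
     M_der false (mfill KM (lz, D1M ++ YM ++ D2M)) C) ->
  M_der false X C.
Proof.
  intros E HC.
  apply smf_of_mf_plug_inv in E
    as (KM & zM & D1M & YM & D2M & lz & la & -> & HK & Hp & Hz & Hla & E1 & EY & E2).
  apply mset_of_list_eq0 in Hla. subst la. rewrite app_nil_r in Hp.
  apply (M_perm _ _ _ _ _ (Permutation_sym Hp)). apply HC; assumption.
Qed.

Ltac premise IH l b W := apply IH; refine (smf_of_mf_plug _ l _ b _ W _ _);
  rewrite ?mset_of_list_app; try mset_eq; reflexivity.

Ltac single_slot_case rule :=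
  match goal with
  | E : smf_of_mf _ = plug _ _ |- _ =>
    apply (M_der_of_empty_stoup_slot _ _ _ _ _ _ _ E); intros KM lz D1M YM D2M <- <- <- HY <-;
    first [apply map_stt_of_mtt_single_F in HY | apply map_eq_nil in HY]; subst YM; apply rule
  end.

Ltac invert_plug E :=
  apply smf_of_mf_plug_inv in E
    as (KM & zM & D1M & YM & D2M & lz & la & -> & <- & Hp & <- & Hla & <- & HY & <-).

Lemma M_der_of_S_der T C : S_der T C -> forall X, smf_of_mf X = T -> M_der false X C.
Proof.
  induction 1 as [A0| |[K z D1 D2] z1 G B C D dR1 IH1 dR2 IH2|z G B C dR IH
    |[K z D1 D2] z1 G A' C D dR1 IH1 dR2 IH2|z G A' C dR IH|[K z D1 D2] A1 A2 D dR IH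
    |z1 De z2 G A1 A2 dR1 IH1 dR2 IH2|[K z D1 D2] D dR IH|[K z D1 D2] A1 A2 D dR1 IH1 dR2 IH2
    |Y A1 A2 dR IH|Y A1 A2 dR IH|[K z D1 D2] A1 A2 D dR IH|[K z D1 D2] A1 A2 D dR IH
    |Y A1 A2 dR1 IH1 dR2 IH2|[K z D1 D2] A' D dR IH|Y A' dR IH|[K z D1 D2] A' D dR IH|Y A' dR IH
    |[K z D1 D2] A' D dR IH|[K z D1 D2] A' D dR IH|z B nz dR IH|[K z D1 D2] z2 z' G2 D nz dR IH];
    intros X E;
  try (destruct X as [zM LM]; unfold smf_of_mf in E; simpl in E; injection E as Hz HL).
  - apply mset_of_list_eq0 in Hz. apply map_stt_of_mtt_single_F in HL. subst. apply M_ax.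
  - apply mset_of_list_eq0 in Hz. apply map_eq_nil in HL. subst. apply M_oneR.
  - invert_plug E. subst z1. apply map_eq_cons in HY as [t [GM [-> [->%stt_of_mtt_F_inv <-]]]].
    apply (M_perm _ (la ++ lz)); [rewrite Hp; apply Permutation_app_comm|].
    apply (M_overL false KM la GM B lz D1M C D2M D);
      [apply IH1; reflexivity|premise IH2 lz mset0 [MF C]].
  - subst. apply M_overR, IH. unfold smf_of_mf; simpl. rewrite map_app. reflexivity.
  - invert_plug E. subst z1. apply map_eq_app in HY as [GM [R [-> [<- ->%map_stt_of_mtt_single_F]]]].
    apply (M_perm _ (la ++ lz)); [rewrite Hp; apply Permutation_app_comm|].
    rewrite <- app_assoc. apply (M_underL false KM la GM A' lz D1M C D2M D);
      [apply IH1; reflexivity|premise IH2 lz mset0 [MF C]].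
  - subst. apply M_underR, IH. reflexivity.
  - single_slot_case M_prodL. premise IH lz mset0 [MF A1; MF A2].
  - apply map_eq_app in HL as [DeM [GM [-> [<- <-]]]].
    destruct (mset_of_list_union_inv _ _ _ Hz) as [l1 [l2 [Hp [<- <-]]]].
    apply (M_perm MHole (l1 ++ l2)); [symmetry; exact Hp|].
    apply M_prodR; [apply IH1|apply IH2]; reflexivity.
  - single_slot_case M_oneL. premise IH lz mset0 (@nil mtt).
  - single_slot_case M_orL; [premise IH1 lz mset0 [MF A1]|premise IH2 lz mset0 [MF A2]].
  - apply M_orR1, IH, E.
  - apply M_orR2, IH, E.
  - single_slot_case M_andL1. premise IH lz mset0 [MF A1].
  - single_slot_case M_andL2. premise IH lz mset0 [MF A2].
  - apply M_andR; [apply IH1|apply IH2]; exact E.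
  - apply (M_der_of_empty_stoup_slot _ _ _ _ _ _ _ E). intros KM lz D1M YM D2M <- <- <- HY <-.
    apply map_eq_cons in HY as [t [R [-> [Ht ->%map_eq_nil]]]].
    apply stt_of_mtt_B_inv in Ht as [zb [Gb [-> [->%mset_of_list_eq0 ->%map_stt_of_mtt_single_F]]]].
    apply M_boxL. premise IH lz mset0 [MF A'].
  - apply M_boxR, IH. subst Y. reflexivity.
  - single_slot_case M_diamL. premise IH lz mset0 [mbr1 A'].
  - apply mset_of_list_eq0 in Hz. apply map_eq_cons in HL as [t [R [-> [Ht ->%map_eq_nil]]]].
    apply stt_of_mtt_B_inv in Ht as [zt [Gt [-> [Hzt HGt]]]]. subst.
    apply (M_diamR false (zt, Gt)), IH. unfold smf_of_mf; simpl. rewrite Hzt, HGt.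
    symmetry. apply smf_eta.
  - single_slot_case M_bangL. premise IH (lz ++ [A']) (mset1 A') (@nil mtt).
  - invert_plug E. apply map_eq_nil in HY. subst YM.
    apply (M_perm _ (lz ++ [A'])).
    { rewrite Hp. apply Permutation_app_head, mset_of_list_perm_inv. exact (eq_sym Hla). }
    apply (M_bangP false KM lz D1M A' D2M D). premise IH lz mset0 [MF A'].
  - apply map_eq_nil in HL. subst. apply M_bangR.
    + intros ->. apply nz. reflexivity.
    + apply IH. reflexivity.
  - invert_plug E. subst G2. destruct (mset_of_list_union_inv _ _ _ Hla) as [l2 [l' [Hp' [<- <-]]]].
    apply (M_perm _ (lz ++ l2 ++ l')); [rewrite Hp, Hp'; reflexivity|].
    apply (M_bangC false KM lz l2 l' D1M YM D2M D).
    + intros ->. apply nz. reflexivity.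
    + apply IH. etransitivity.
      * exact (smf_of_mf_plug KM (lz ++ l2) lz _ D1M [MB (l' ++ l2) YM] D2M (mset_of_list_app _ _)).
      * simpl. rewrite mset_of_list_app. reflexivity.
Qed.

(** * From cut-free M' to cut-free F *)

(** A stoup is written out as a prefix of !-formulae. *)
Fixpoint ftt_of_mtt (t : mtt) : ftt :=
  match t with MF A => FF A | MB z G => FB (fbangs z ++ map ftt_of_mtt G) end.

Definition flist_of_mf (X : mf) : list ftt := fbangs (fst X) ++ map ftt_of_mtt (snd X).

Fixpoint fctx_of_mctx (K : mctx) : fctx :=
  match K with
  | MHole => FHole
  | MIn z G1 K' G2 => FIn (fbangs z ++ map ftt_of_mtt G1) (fctx_of_mctx K') (map ftt_of_mtt G2)
  end.

Lemma flist_of_mfill K X : flist_of_mf (mfill K X) = ffill (fctx_of_mctx K) (flist_of_mf X).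
Proof.
  induction K as [|z G1 K IH G2]; [reflexivity|]. unfold flist_of_mf at 1; simpl.
  rewrite map_app. unfold mbr. rewrite <- IH. unfold flist_of_mf. rewrite app_assoc. reflexivity.
Qed.

Fixpoint fctx_comp (K1 K2 : fctx) : fctx :=
  match K1 with FHole => K2 | FIn G1 K G2 => FIn G1 (fctx_comp K K2) G2 end.

Lemma ffill_fctx_comp K1 K2 L : ffill (fctx_comp K1 K2) L = ffill K1 (ffill K2 L).
Proof. induction K1 as [|G1 K IH G2]; simpl; rewrite ?IH; reflexivity. Qed.

Lemma fbangs_app l1 l2 : fbangs (l1 ++ l2) = fbangs l1 ++ fbangs l2.
Proof. apply map_app. Qed.

Lemma F_der_eq X Y C : F_der false X C -> X = Y -> F_der false Y C.
Proof. intros d <-; exact d. Qed.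

Ltac flist_eq := rewrite ?fbangs_app, ?map_app; simpl; rewrite ?fbangs_app, ?map_app;
  first [reflexivity | f_equal; list_eq | list_eq].

Lemma F_bangs_move_r K Phi l D1 D2 C :
  F_der false (ffill K (D1 ++ fbangs l ++ Phi ++ D2)) C ->
  F_der false (ffill K (D1 ++ Phi ++ fbangs l ++ D2)) C.
Proof.
  revert D1; induction l as [|A l IH]; intros D1 d; [exact d|].
  assert (d1 : F_der false (ffill K ((D1 ++ [FF (Bang A)]) ++ Phi ++ fbangs l ++ D2)) C).
  { apply IH. eapply F_der_eq; [exact d|]. flist_eq. }
  eapply F_der_eq; [apply (F_bangP1 false K D1 A Phi (fbangs l ++ D2))|flist_eq].
  eapply F_der_eq; [exact d1|]. flist_eq.
Qed.

Lemma F_bangs_move_l K Phi l D1 D2 C :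
  F_der false (ffill K (D1 ++ Phi ++ fbangs l ++ D2)) C ->
  F_der false (ffill K (D1 ++ fbangs l ++ Phi ++ D2)) C.
Proof.
  revert D1; induction l as [|A l IH]; intros D1 d; [exact d|].
  assert (d1 := F_bangP2 false K D1 A Phi (fbangs l ++ D2) C d).
  eapply F_der_eq; [apply (IH (D1 ++ [FF (Bang A)]))|flist_eq].
  eapply F_der_eq; [exact d1|]. flist_eq.
Qed.

Lemma F_bangs_perm K l l' D1 D2 C : Permutation l l' ->
  F_der false (ffill K (D1 ++ fbangs l ++ D2)) C -> F_der false (ffill K (D1 ++ fbangs l' ++ D2)) C.
Proof.
  intros Hp. revert D1. induction Hp as [|x l l' _ IH|x y l|l l' l'' _ IH1 _ IH2]; intros D1 d; auto.
  - eapply F_der_eq; [apply (IH (D1 ++ [FF (Bang x)]))|flist_eq]. eapply F_der_eq; [exact d|]. flist_eq.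
  - eapply F_der_eq; [apply (F_bangP1 false K D1 y [FF (Bang x)] (fbangs l ++ D2))|flist_eq].
    eapply F_der_eq; [exact d|]. flist_eq.
Qed.

Definition ftt_replaceable (t t' : mtt) : Prop := forall K D1 D2 C,
  F_der false (ffill K (D1 ++ ftt_of_mtt t :: D2)) C ->
  F_der false (ffill K (D1 ++ ftt_of_mtt t' :: D2)) C.

Lemma Forall2_ftt_replaceable G G' : Forall2 ftt_replaceable G G' -> forall K D1 D2 C,
  F_der false (ffill K (D1 ++ map ftt_of_mtt G ++ D2)) C ->
  F_der false (ffill K (D1 ++ map ftt_of_mtt G' ++ D2)) C.
Proof.
  induction 1 as [|x y l l' Hxy _ IH]; intros K D1 D2 C d; [exact d|].
  apply Hxy in d. eapply F_der_eq; [apply (IH K (D1 ++ [ftt_of_mtt y]) D2 C)|flist_eq].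
  eapply F_der_eq; [exact d|]. flist_eq.
Qed.

Lemma mtt_eq_ftt_replaceable t t' : mtt_eq t t' -> ftt_replaceable t t'.
Proof.
  apply mtt_eq_ind_nested; [intros A K D1 D2 C d; exact d|].
  intros z z' G G' Hp HP K D1 D2 C d. simpl in *.
  replace (ffill K (D1 ++ FB (fbangs z' ++ map ftt_of_mtt G') :: D2)) with
    (ffill (fctx_comp K (FIn D1 FHole D2)) ([] ++ fbangs z' ++ map ftt_of_mtt G' ++ []))
    by (rewrite ffill_fctx_comp; simpl; rewrite app_nil_r; reflexivity).
  apply (Forall2_ftt_replaceable G); [exact HP|].
  apply (F_bangs_perm _ z z' [] (map ftt_of_mtt G ++ []) C Hp).
  eapply F_der_eq; [exact d|]. rewrite ffill_fctx_comp; simpl; rewrite app_nil_r; reflexivity.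
Qed.

Lemma F_der_mf_eq X X' C : mf_eq X X' ->
  F_der false (flist_of_mf X) C -> F_der false (flist_of_mf X') C.
Proof.
  intros [Hp HF] d. unfold flist_of_mf in *.
  rewrite <- (app_nil_l (fbangs _ ++ _)), <- (app_nil_r (map ftt_of_mtt (snd X'))).
  change (F_der false (ffill FHole ([] ++ fbangs (fst X') ++ map ftt_of_mtt (snd X') ++ [])) C).
  apply (Forall2_ftt_replaceable (snd X)); [exact (Forall2_impl _ mtt_eq_ftt_replaceable HF)|].
  apply (F_bangs_perm _ (fst X) (fst X') [] (map ftt_of_mtt (snd X) ++ []) C Hp).
  simpl. rewrite app_nil_r. exact d.
Qed.

Local Notation ftts := (map ftt_of_mtt).

Ltac flist_of_mf_eq := rewrite ?ffill_fctx_comp, ?flist_of_mfill; unfold flist_of_mf, mbr, mbr1; simpl;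
  rewrite ?fbangs_app, ?map_app; simpl; rewrite ?fbangs_app, ?map_app; simpl;
  first [reflexivity | f_equal; list_eq | list_eq].
Ltac F_via t := eapply F_der_eq; [t|flist_of_mf_eq].
Ltac F_from IH := eapply F_der_eq; [exact IH|flist_of_mf_eq].

Lemma F_der_of_M_der X C : M_der false X C -> F_der false (flist_of_mf X) C.
Proof.
  induction 1 as [X X' C d IH Heq|A| |K z1 G B z2 D1 C D2 D d1 IH1 d2 IH2|z G B C d IH
    |K z1 G A z2 D1 C D2 D d1 IH1 d2 IH2|z G A C d IH|K z D1 A B D2 D d IH
    |z1 De z2 G A B d1 IH1 d2 IH2|K z D1 D2 A d IH|K z D1 A1 A2 D2 C d1 IH1 d2 IH2|X A1 A2 d IH
    |X A1 A2 d IH|K z D1 A1 A2 D2 C d IH|K z D1 A1 A2 D2 C d IH|X A1 A2 d1 IH1 d2 IH2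
    |K z D1 A D2 B d IH|X A d IH|K z D1 A D2 B d IH|X A d IH|K z A G1 G2 B d IH|K z G1 A G2 B d IH
    |z B nz d IH|K z1 z2 z' G1 G2 G3 C nz d IH|K xi Pi A z G1 G2 C Hc d1 IH1 d2 IH2].
  - exact (F_der_mf_eq X X' C Heq IH).
  - apply F_ax.
  - apply F_oneR.
  - F_via ltac:(apply (F_bangs_perm (fctx_of_mctx K) (z2 ++ z1) (z1 ++ z2) []
                        (ftts D1 ++ FF (Over C B) :: ftts G ++ ftts D2) D (Permutation_app_comm _ _))).
    F_via ltac:(apply (F_bangs_move_l (fctx_of_mctx K) (ftts D1 ++ [FF (Over C B)]) z1 (fbangs z2)
                        (ftts G ++ ftts D2))).
    F_via ltac:(apply (F_overL false (fctx_of_mctx K) (fbangs z1 ++ ftts G) B (fbangs z2 ++ ftts D1) C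
                        (ftts D2) D IH1)).
    F_from IH2.
  - apply F_overR. F_from IH.
  - F_via ltac:(apply (F_bangs_perm (fctx_of_mctx K) (z2 ++ z1) (z1 ++ z2) []
                        (ftts D1 ++ ftts G ++ FF (Under A C) :: ftts D2) D (Permutation_app_comm _ _))).
    F_via ltac:(apply (F_bangs_move_l (fctx_of_mctx K) (ftts D1) z1 (fbangs z2)
                        (ftts G ++ FF (Under A C) :: ftts D2))).
    F_via ltac:(apply (F_underL false (fctx_of_mctx K) (fbangs z1 ++ ftts G) A (fbangs z2 ++ ftts D1) C
                        (ftts D2) D IH1)).
    F_from IH2.
  - apply F_underR. F_via ltac:(apply (F_bangs_move_r FHole [FF A] z [] (ftts G))). F_from IH.
  - F_via ltac:(apply (F_prodL false (fctx_of_mctx K) (fbangs z ++ ftts D1) A B (ftts D2) D)).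
    F_from IH.
  - F_via ltac:(apply (F_bangs_move_l FHole (ftts De) z2 (fbangs z1) (ftts G))).
    F_via ltac:(apply (F_prodR false (fbangs z1 ++ ftts De) (fbangs z2 ++ ftts G) A B IH1 IH2)).
  - F_via ltac:(apply (F_oneL false (fctx_of_mctx K) (fbangs z ++ ftts D1) (ftts D2) A)). F_from IH.
  - F_via ltac:(apply (F_orL false (fctx_of_mctx K) (fbangs z ++ ftts D1) A1 A2 (ftts D2) C));
      [F_from IH1|F_from IH2].
  - apply F_orR1, IH.
  - apply F_orR2, IH.
  - F_via ltac:(apply (F_andL1 false (fctx_of_mctx K) (fbangs z ++ ftts D1) A1 A2 (ftts D2) C)).
    F_from IH.
  - F_via ltac:(apply (F_andL2 false (fctx_of_mctx K) (fbangs z ++ ftts D1) A1 A2 (ftts D2) C)).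
    F_from IH.
  - apply F_andR; assumption.
  - F_via ltac:(apply (F_boxL false (fctx_of_mctx K) (fbangs z ++ ftts D1) A (ftts D2) B)). F_from IH.
  - apply F_boxR. F_from IH.
  - F_via ltac:(apply (F_diamL false (fctx_of_mctx K) (fbangs z ++ ftts D1) A (ftts D2) B)). F_from IH.
  - F_via ltac:(apply (F_diamR false (flist_of_mf X) A IH)).
  - F_via ltac:(apply (F_bangs_move_r (fctx_of_mctx K) (ftts G1) [A] (fbangs z) (ftts G2))).
    F_from IH.
  - F_via ltac:(apply (F_bangs_move_l (fctx_of_mctx K) (ftts G1) [A] (fbangs z) (ftts G2))).
    F_via ltac:(apply (F_bangL false (fctx_of_mctx K) (fbangs z ++ ftts G1) A (ftts G2) B)).
    F_from IH.
  - F_via ltac:(apply (F_bangR false z B nz)). F_from IH.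
  - F_via ltac:(apply (F_bangs_perm (fctx_of_mctx K) (z2 ++ z1 ++ z') (z1 ++ z2 ++ z') []
                        (ftts G1 ++ ftts G2 ++ ftts G3) C));
      [rewrite !app_assoc; apply Permutation_app_tail, Permutation_app_comm|].
    F_via ltac:(apply (F_bangs_move_l (fctx_of_mctx K) (ftts G1) z' (fbangs z2 ++ fbangs z1)
                        (ftts G2 ++ ftts G3))).
    F_via ltac:(apply (F_bangC false (fctx_of_mctx K) z2 (fbangs z1 ++ ftts G1) (fbangs z' ++ ftts G2)
                        (ftts G3) C nz)).
    F_via ltac:(apply (F_bangs_perm
                        (fctx_comp (fctx_of_mctx K)
                                   (FIn (fbangs z2 ++ fbangs z1 ++ ftts G1) FHole (ftts G3)))
                        (z' ++ z2) (z2 ++ z') [] (ftts G2) C (Permutation_app_comm _ _))).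
    F_via ltac:(apply (F_bangs_perm (fctx_of_mctx K) (z1 ++ z2) (z2 ++ z1) []
                        (ftts G1 ++ FB (fbangs (z' ++ z2) ++ ftts G2) :: ftts G3) C
                        (Permutation_app_comm _ _))).
    F_from IH.
  - discriminate.
Qed.


Lemma F_der_with_cut X C : F_der false X C -> F_der true X C.
Proof.
  induction 1; try discriminate;
  [ apply F_ax | apply F_oneR | eapply F_overL | eapply F_overR | eapply F_underL | eapply F_underR
  | eapply F_prodL | eapply F_prodR | eapply F_oneL | eapply F_orL | eapply F_orR1 | eapply F_orR2
  | eapply F_andL1 | eapply F_andL2 | eapply F_andR | eapply F_boxL | eapply F_boxR | eapply F_diamL
  | eapply F_diamR | eapply F_bangL | eapply F_bangP1 | eapply F_bangP2 | eapply F_bangR | eapply F_bangC ];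
  eassumption.
Qed.

Lemma M_der_with_cut X C : M_der false X C -> M_der true X C.
Proof.
  induction 1; try discriminate;
  [ eapply M_mset | apply M_ax | apply M_oneR | eapply M_overL | eapply M_overR | eapply M_underL
  | eapply M_underR | eapply M_prodL | eapply M_prodR | eapply M_oneL | eapply M_orL | eapply M_orR1
  | eapply M_orR2 | eapply M_andL1 | eapply M_andL2 | eapply M_andR | eapply M_boxL | eapply M_boxR
  | eapply M_diamL | eapply M_diamR | eapply M_bangL | eapply M_bangP | eapply M_bangR | eapply M_bangC ];
  eassumption.
Qed.

Fixpoint stt_of_emb_tt (t : ftt) : stt_of_mtt (emb_tt t) = stt_of_ftt t :=
  match t with
  | FF A => eq_refl
  | FB G => f_equal (SB mset0)
      ((fix map_eq (G : list ftt) : map stt_of_mtt (map emb_tt G) = map stt_of_ftt G :=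
          match G with [] => eq_refl | t :: G => f_equal2 cons (stt_of_emb_tt t) (map_eq G) end) G)
  end.

Lemma smf_of_emb X : smf_of_mf (emb X) = smf_of_flist X.
Proof.
  unfold smf_of_mf, smf_of_flist, emb; simpl. f_equal.
  rewrite map_map. apply map_ext, stt_of_emb_tt.
Qed.

Fixpoint ftt_of_emb_tt (t : ftt) : ftt_of_mtt (emb_tt t) = t :=
  match t with
  | FF A => eq_refl
  | FB G => f_equal FB
      ((fix map_eq (G : list ftt) : map ftt_of_mtt (map emb_tt G) = G :=
          match G with [] => eq_refl | t :: G => f_equal2 cons (ftt_of_emb_tt t) (map_eq G) end) G)
  end.

Lemma flist_of_emb X : flist_of_mf (emb X) = X.
Proof.
  unfold flist_of_mf, emb; simpl. rewrite map_map, (map_ext _ _ ftt_of_emb_tt). apply map_id.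
Qed.

Theorem proposition2 (X : list ftt) (C : formula) :
  (F_der false X C <-> F_der true X C) /\
  (F_der true X C <-> M_der true (emb X) C) /\
  (M_der true (emb X) C <-> M_der false (emb X) C).
Proof.
  assert (M_cutfree_of_S : S_der (smf_of_flist X) C -> M_der false (emb X) C).
  { intros d. apply (M_der_of_S_der _ _ d). apply smf_of_emb. }
  assert (F_cutfree_of_M : M_der false (emb X) C -> F_der false X C).
  { intros d. rewrite <- (flist_of_emb X). apply F_der_of_M_der, d. }
  assert (M_cutfree_of_M : M_der true (emb X) C -> M_der false (emb X) C).
  { intros d. apply M_cutfree_of_S. rewrite <- smf_of_emb. exact (S_der_of_M_der _ _ _ d). }
  assert (M_cutfree_of_F : F_der true X C -> M_der false (emb X) C).
  { intros d. exact (M_cutfree_of_S (S_der_of_F_der _ _ _ d)). }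
  split; [|split]; split; intros d.
  - apply F_der_with_cut, d.
  - apply F_cutfree_of_M, M_cutfree_of_F, d.
  - apply M_der_with_cut, M_cutfree_of_F, d.
  - apply F_der_with_cut, F_cutfree_of_M, M_cutfree_of_M, d.
  - apply M_cutfree_of_M, d.
  - apply M_der_with_cut, d.
Qed.
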